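(* Let $M>2$, $p_M=\frac{M+2}{M-2}$, $m\ge1$, and for $p\in(1,p_M)$ let $v_p$ be the unique solution in $H^1_{0,M}$ of $-(t^{M-1}v')'=t^{M-1}|v|^{p-1}v$ on $(0,1)$, $v'(0)=0$, $v(1)=0$, with exactly $m$ nodal zones and $v_p(0)>0$. For all $i=0,\dots,m-1$, \[ \liminf_{p\to p_M}\int_{t_{i,p}}^{t_{i+1,p}}t^{M-1}|v_p|^{p+1}dt=\liminf_{p\to p_M}\int_{t_{i,p}}^{t_{i+1,p}}t^{M-1}|v_p'|^{2}dt\ge S_M^{M/2}, \] and in particular $\liminf_{p\to p_M}\mathcal M_{i,p}>0$.
   Context: $H^1_{0,M}$: measurable $v$ on $(0,1)$ with $\int_0^1t^{M-1}(v^2+|v'|^2)<\infty$ and $v(1)=0$. $0=t_{0,p}<t_{1,p}<\dots<t_{m,p}=1$ are $0$ and the zeros of $v_p$; $\mathcal M_{i,p}=\max_{[t_{i,p},t_{i+1,p}]}|v_p|$. $S_M=\inf\{\int_0^1t^{M-1}|v'|^2dt/(\int_0^1t^{M-1}|v|^{2M/(M-2)}dt)^{(M-2)/M}: v\in H^1_{0,M}\setminus\{0\}\}$ is the best constant of the Sobolev embedding of $H^1_{0,M}$ into the weighted space $L^{2M/(M-2)}$ with weight $t^{M-1}$. *)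

From Stdlib Require Import Reals.
From Coquelicot Require Import Coquelicot.
Open Scope R_scope.

(* real power with the convention x^y = 0 for x <= 0 (used with y > 0) *)
Definition rpow (x y : R) : R := if Rle_dec x 0 then 0 else Rpower x y.

Definition wgt (M t : R) : R := rpow t (M - 1).

Definition wint (M : R) (f : R -> R) : R :=
  RInt_gen (fun t => wgt M t * f t) (at_right 0) (at_point 1).
Definition wint_ex (M : R) (f : R -> R) : Prop :=
  ex_RInt_gen (fun t => wgt M t * f t) (at_right 0) (at_point 1).

(* (regular representatives of) H^1_{0,M}: C^1 functions on (0,1] with
   v(1)=0 and int_0^1 t^(M-1) (v^2 + |v'|^2) < oo *)
Definition H10M (M : R) (v : R -> R) : Prop :=
  v 1 = 0 /\
  (forall t, 0 < t <= 1 -> ex_derive v t /\ continuous (Derive v) t) /\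
  wint_ex M (fun t => v t ^ 2) /\ wint_ex M (fun t => Derive v t ^ 2).

Definition S_M (M : R) : R :=
  real (Rbar_glb (fun y : Rbar => exists v : R -> R,
     H10M M v /\ (exists t, 0 < t < 1 /\ v t <> 0) /\
     wint_ex M (fun t => rpow (Rabs (v t)) (2 * M / (M - 2))) /\
     y = Finite (wint M (fun t => Derive v t ^ 2) /
          rpow (wint M (fun t => rpow (Rabs (v t)) (2 * M / (M - 2))))
               ((M - 2) / M)))).

Definition radial_sol (M p : R) (v : R -> R) : Prop :=
  H10M M v /\
  filterlim v (at_right 0) (locally (v 0)) /\
  filterlim (Derive v) (at_right 0) (locally 0) /\
  (forall t, 0 < t < 1 ->
     is_derive (fun s => wgt M s * Derive v s) t
               (- (wgt M t * (rpow (Rabs (v t)) (p - 1) * v t)))).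

(* t 0 = 0 < t 1 < ... < t m = 1, and t 1..t m are exactly the zeros of v in [0,1]
   (so v has exactly m nodal zones) *)
Definition nodal_points (m : nat) (v : R -> R) (t : nat -> R) : Prop :=
  t 0%nat = 0 /\ t m = 1 /\
  (forall i, (i < m)%nat -> t i < t (S i)) /\
  (forall i, (1 <= i <= m)%nat -> v (t i) = 0) /\
  (forall s, 0 <= s <= 1 -> v s = 0 -> exists i, (1 <= i <= m)%nat /\ s = t i).

Definition liminf_left (f : R -> R) (a : R) : Rbar :=
  Rbar_lub (fun y => exists d, 0 < d /\
     y = Rbar_glb (fun z => exists p, a - d < p < a /\ z = Finite (f p))).

Definition maxabs (v : R -> R) (a b : R) : R :=
  real (Lub_Rbar (fun y => exists s, a <= s <= b /\ y = Rabs (v s))).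

(* On a nodal zone [[a, b]] of [v_p], multiplying the equation by [v_p] and integrating by
   parts gives [E_p := \int_a^b t^(M-1) |v_p|^(p+1) = \int_a^b t^(M-1) |v_p'|^2], whence the
   equality of the two lower limits.  Truncating [v_p] by a C^1 function that vanishes near [0]
   and extending it by [0] outside the zone gives an admissible test function for [S_M]; the
   Sobolev inequality, Jensen's inequality (the weight has mass at most 1 on [(0, 1)]) and
   letting the truncation level tend to [0] give [S_M E_p^(2/(p+1)) <= E_p], that is
   [E_p >= S_M^((p+1)/(p-1))], which tends to [S_M^(M/2)].  Finally, as [v_p] vanishes at [b],
   Cauchy-Schwarz gives [t^(M-1) v_p(t)^2 <= E_p / (M - 2)], so
   [E_p <= max|v_p|^(p-1) E_p / (M - 2)] and [max|v_p|^(p-1) >= M - 2]. *)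

From Stdlib Require Import Reals Lra Lia.
From Coquelicot Require Import Coquelicot.
Open Scope R_scope.

(** * Real powers *)

Lemma rpowE x y : 0 < x -> rpow x y = Rpower x y.
Proof. intros Hx; unfold rpow; destruct (Rle_dec x 0); [lra|reflexivity]. Qed.

Lemma rpow_le0 x y : x <= 0 -> rpow x y = 0.
Proof. intros Hx; unfold rpow; destruct (Rle_dec x 0); [reflexivity|lra]. Qed.

Lemma rpow_gt0 x y : 0 < x -> 0 < rpow x y.
Proof. intros Hx; rewrite rpowE by exact Hx; apply exp_pos. Qed.

Lemma rpow_ge0 x y : 0 <= rpow x y.
Proof.
  destruct (Rle_dec x 0) as [Hx|Hx].
  - rewrite rpow_le0; lra.
  - apply Rlt_le, rpow_gt0; lra.
Qed.

Lemma rpow_le_l x y r : 0 <= x <= y -> 0 <= r -> rpow x r <= rpow y r.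
Proof.
  intros Hxy Hr. destruct (Req_dec x 0) as [->|Hx].
  - rewrite (rpow_le0 0) by lra. apply rpow_ge0.
  - rewrite !rpowE by lra. apply Rle_Rpower_l; lra.
Qed.

Lemma rpow_lt_l x y r : 0 <= x < y -> 0 < r -> rpow x r < rpow y r.
Proof.
  intros Hxy Hr. destruct (Req_dec x 0) as [->|Hx].
  - rewrite (rpow_le0 0) by lra. apply rpow_gt0; lra.
  - rewrite !rpowE by lra. apply Rlt_Rpower_l; lra.
Qed.

Lemma rpow_rpow x a b : 0 <= x -> 0 < a -> rpow (rpow x a) b = rpow x (a * b).
Proof.
  intros Hx Ha. destruct (Req_dec x 0) as [->|Hx0].
  - now rewrite !(rpow_le0 0) by lra.
  - rewrite (rpowE x a), !rpowE by (try apply exp_pos; lra). apply Rpower_mult.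
Qed.

Lemma rpow_1 x : 0 <= x -> rpow x 1 = x.
Proof.
  intros Hx. destruct (Req_dec x 0) as [->|H].
  - apply rpow_le0; lra.
  - rewrite rpowE by lra. apply Rpower_1; lra.
Qed.

Lemma rpow_abs_mul_sq p x : rpow (Rabs x) (p - 1) * x * x = rpow (Rabs x) (p + 1).
Proof.
  destruct (Req_dec x 0) as [->|Hx].
  - rewrite Rabs_R0, !rpow_le0 by lra. ring.
  - assert (Hx' : 0 < Rabs x) by now apply Rabs_pos_lt.
    rewrite !rpowE by exact Hx'.
    replace (p + 1) with ((p - 1) + INR 2) by (simpl; ring).
    rewrite Rpower_plus, Rpower_pow by exact Hx'. simpl.
    rewrite Rmult_1_r, Rmult_assoc, <- Rabs_mult, (Rabs_pos_eq (x * x));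
      [reflexivity|apply Rle_0_sqr].
Qed.

Lemma rpow_div_rpow f A r q : 0 <= f -> 0 < A -> 0 < q ->
  rpow (rpow f q / A) (r / q) = rpow f r / rpow A (r / q).
Proof.
  intros Hf HA Hq. destruct (Req_dec f 0) as [->|Hf0].
  - rewrite !(rpow_le0 0) by lra. unfold Rdiv. rewrite Rmult_0_l, rpow_le0 by lra. ring.
  - assert (Hfq : 0 < rpow f q) by (apply rpow_gt0; lra).
    rewrite (rpowE (_ / A)) by (apply Rdiv_lt_0_compat; lra).
    rewrite !rpowE by lra. unfold Rdiv, Rpower.
    rewrite ln_mult, ln_Rinv, ln_exp, <- exp_Ropp, <- exp_plus
      by (try apply Rinv_0_lt_compat; try apply exp_pos; lra).
    f_equal. field. lra.
Qed.

Lemma is_derive_rpow r x : 0 < x -> is_derive (fun y => rpow y r) x (r * rpow x (r - 1)).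
Proof.
  intros Hx. apply is_derive_ext_loc with (fun y => Rpower y r).
  - apply locally_interval with (Finite 0) p_infty; [exact Hx|exact I|].
    intros y Hy _. symmetry. now apply rpowE.
  - rewrite rpowE by exact Hx. apply is_derive_Reals, derivable_pt_lim_power, Hx.
Qed.

Lemma continuous_rpow r x : 0 < r -> continuous (fun y => rpow y r) x.
Proof.
  intros Hr. destruct (Rtotal_order x 0) as [Hx|[->|Hx]].
  - apply continuous_ext_loc with (fun _ => 0); [|apply continuous_const].
    apply locally_interval with m_infty (Finite 0); [exact I|exact Hx|].
    intros y _ Hy. symmetry. apply rpow_le0. simpl in Hy. lra.
  - apply filterlim_locally. intros eps.
    assert (Hd : 0 < Rpower eps (/ r)) by apply exp_pos.
    exists (mkposreal _ Hd). intros y Hy.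
    unfold ball in Hy |- *; simpl in Hy |- *; unfold AbsRing_ball, abs, minus, plus, opp in Hy |- *;
      simpl in Hy |- *.
    rewrite (rpow_le0 0), Ropp_0, Rplus_0_r, Rabs_pos_eq by (apply rpow_ge0 || lra).
    rewrite Ropp_0, Rplus_0_r in Hy.
    destruct (Rle_dec y 0) as [Hy0|Hy0]; [rewrite rpow_le0 by exact Hy0; apply cond_pos|].
    rewrite Rabs_pos_eq in Hy by lra. rewrite rpowE by lra.
    replace (pos eps) with (Rpower (Rpower eps (/ r)) r).
    + apply Rlt_Rpower_l; lra.
    + rewrite Rpower_mult, Rinv_l, Rpower_1 by (apply cond_pos || lra). reflexivity.
  - apply (ex_derive_continuous (K := R_AbsRing) (V := R_NormedModule)).
    eexists. now apply is_derive_rpow.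
Qed.

Lemma continuous_rpow_abs r x : 0 < r -> continuous (fun y => rpow (Rabs y) r) x.
Proof.
  intros Hr. apply (continuous_comp Rabs (fun y => rpow y r)).
  - apply continuity_pt_filterlim, Rcontinuity_abs.
  - now apply continuous_rpow.
Qed.

Lemma continuous_rpow_exponent S x : continuous (fun y => rpow S y) x.
Proof.
  destruct (Rle_dec S 0) as [HS|HS].
  - apply continuous_ext with (fun _ => 0); [|apply continuous_const].
    intros y. symmetry. now apply rpow_le0.
  - apply continuous_ext with (fun y => exp (y * ln S)).
    + intros y. rewrite rpowE by lra. reflexivity.
    + apply (ex_derive_continuous (K := R_AbsRing) (V := R_NormedModule)). auto_derive. exact I.
Qed.

Lemma continuous_rpow_ratio S x : x <> 1 -> continuous (fun p => rpow S ((p + 1) / (p - 1))) x.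
Proof.
  intros Hx. apply (continuous_comp (fun p => (p + 1) / (p - 1)) (rpow S));
    [|apply continuous_rpow_exponent].
  apply (ex_derive_continuous (K := R_AbsRing) (V := R_NormedModule)). auto_derive. lra.
Qed.

(* Weighted AM-GM; from [exp u >= 1 + u] at [u = (1 - th) ln x] and at [u = - th ln x]. *)
Lemma rpow_le_affine th x : 0 < th < 1 -> 0 <= x -> rpow x th <= th * x + (1 - th).
Proof.
  intros Hth Hx. destruct (Req_dec x 0) as [->|Hx0]; [rewrite rpow_le0; lra|].
  rewrite rpowE by lra. unfold Rpower.
  set (s := ln x). set (e := exp (th * s)).
  assert (He : 0 < e) by apply exp_pos.
  assert (Ex : x = e * exp ((1 - th) * s)).
  { unfold e. rewrite <- exp_plus. replace (th * s + (1 - th) * s) with s by ring.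
    unfold s. now rewrite exp_ln by lra. }
  assert (E1 : 1 = e * exp (- (th * s))).
  { unfold e. rewrite <- exp_plus, Rplus_opp_r. now rewrite exp_0. }
  pose proof (exp_ineq1_le ((1 - th) * s)). pose proof (exp_ineq1_le (- (th * s))).
  rewrite Ex. rewrite E1 at 2.
  assert (0 <= th * e * (exp ((1 - th) * s) - (1 + (1 - th) * s))) by
    (repeat apply Rmult_le_pos; lra).
  assert (0 <= (1 - th) * e * (exp (- (th * s)) - (1 + - (th * s)))) by
    (repeat apply Rmult_le_pos; lra).
  nra.
Qed.

Lemma rpow_sub_le x y K r : 0 <= y <= x -> x <= K -> 1 <= r ->
  rpow x r - rpow y r <= r * rpow K (r - 1) * (x - y).
Proof.
  intros Hxy HK Hr. destruct (Req_dec x y) as [->|Hne]; [rewrite !Rminus_diag, Rmult_0_r; lra|].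
  destruct (MVT_gen (fun z => rpow z r) y x (fun z => r * rpow z (r - 1))) as [c [Hc ->]].
  - intros z Hz. rewrite Rmin_left, Rmax_right in Hz by lra. apply is_derive_rpow. lra.
  - intros z _. apply continuity_pt_filterlim, continuous_rpow. lra.
  - rewrite Rmin_left, Rmax_right in Hc by lra.
    apply Rmult_le_compat_r; [lra|]. apply Rmult_le_compat_l; [lra|].
    apply rpow_le_l; lra.
Qed.

Lemma mul_rpow_le_of_approx S E s : 0 < S -> 0 < E -> 0 < s ->
  (forall y, 0 < y < E -> exists D, y < D /\ S * rpow D s <= E) -> S * rpow E s <= E.
Proof.
  intros HS HE Hs Happrox. apply Rnot_lt_le. intros Hlt.
  set (y := rpow (E / S) (/ s)).
  assert (HES : 0 < E / S) by now apply Rdiv_lt_0_compat.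
  assert (Hy0 : 0 < y) by now apply rpow_gt0.
  assert (Hys : rpow y s = E / S).
  { unfold y. rewrite rpow_rpow, Rinv_l, rpow_1 by (try apply Rinv_0_lt_compat; lra). reflexivity. }
  assert (HyE : y < E).
  { apply Rnot_le_lt. intros Hle. pose proof (rpow_le_l E y s ltac:(lra) ltac:(lra)).
    assert (S * rpow E s <= S * (E / S)) by (rewrite <- Hys; apply Rmult_le_compat_l; lra).
    replace (S * (E / S)) with E in * by (field; lra). lra. }
  destruct (Happrox y (conj Hy0 HyE)) as [D [HyD HD]].
  assert (HltD : S * rpow y s < S * rpow D s)
    by (apply Rmult_lt_compat_l; [lra|apply rpow_lt_l; lra]).
  rewrite Hys in HltD. replace (S * (E / S)) with E in HltD by (field; lra). lra.
Qed.

Lemma rpow_le_of_mul_rpow_le S E r : 0 < S -> 0 < E -> 2 < r ->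
  S * rpow E (2 / r) <= E -> rpow S (r / (r - 2)) <= E.
Proof.
  intros HS HE Hr HSE.
  assert (HS' : S <= rpow E ((r - 2) / r)).
  { apply Rmult_le_reg_r with (rpow E (2 / r)); [now apply rpow_gt0|].
    rewrite !rpowE, <- Rpower_plus by exact HE.
    replace ((r - 2) / r + 2 / r) with 1 by (field; lra).
    rewrite Rpower_1 by exact HE. rewrite rpowE in HSE by exact HE. exact HSE. }
  eapply Rle_trans;
    [apply rpow_le_l; [split; [lra|exact HS']|apply Rlt_le, Rdiv_lt_0_compat; lra]|].
  rewrite rpow_rpow by (try apply Rdiv_lt_0_compat; lra).
  replace ((r - 2) / r * (r / (r - 2))) with 1 by (field; lra). rewrite rpow_1; lra.
Qed.

Lemma Rmin_Rpower_le_of_le_rpow x s k A : 0 < A -> 0 < k < s -> 0 <= x -> A <= rpow x s ->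
  Rmin 1 (Rpower A (/ k)) <= x.
Proof.
  intros HA Hk Hx HAx.
  destruct (Rle_dec 1 x) as [H1|H1]; [eapply Rle_trans; [apply Rmin_l|exact H1]|].
  eapply Rle_trans; [apply Rmin_r|].
  destruct (Req_dec x 0) as [->|Hx0]; [rewrite rpow_le0 in HAx; lra|].
  rewrite rpowE in HAx by lra.
  assert (Hln : ln x < 0) by (rewrite <- ln_1; apply ln_increasing; lra).
  assert (Hsk : Rpower x s <= Rpower x k).
  { unfold Rpower. apply Rlt_le, exp_increasing. nra. }
  replace x with (Rpower (Rpower x k) (/ k)).
  - apply Rle_Rpower_l; [apply Rlt_le, Rinv_0_lt_compat; lra|lra].
  - rewrite Rpower_mult, Rinv_r, Rpower_1 by lra. reflexivity.
Qed.

(** * Continuity and Riemann integrals on R *)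

Lemma continuous_Rmult (f g : R -> R) x : continuous f x -> continuous g x ->
  continuous (fun y => f y * g y) x.
Proof. apply (continuous_mult f g). Qed.

Lemma continuous_Rminus (f g : R -> R) x : continuous f x -> continuous g x ->
  continuous (fun y => f y - g y) x.
Proof.
  intros Hf Hg. apply (continuous_plus f (fun y => - g y)); [exact Hf|].
  now apply (continuous_opp g).
Qed.

Lemma continuous_Rsqr (f : R -> R) x : continuous f x -> continuous (fun y => f y ^ 2) x.
Proof.
  intros Hf. apply continuous_ext with (fun y => f y * f y).
  - intros y. simpl. ring.
  - now apply continuous_Rmult.
Qed.

Lemma continuous_Rcomp (f g : R -> R) x : continuous f x -> continuous g (f x) ->
  continuous (fun y => g (f y)) x.
Proof. apply (continuous_comp f g). Qed.

Lemma continuous_Rabs x : continuous Rabs x.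
Proof. apply continuity_pt_filterlim, Rcontinuity_abs. Qed.

Lemma continuous_eps (f : R -> R) x eps : continuous f x -> 0 < eps ->
  exists d, 0 < d /\ forall y, Rabs (y - x) < d -> Rabs (f y - f x) < eps.
Proof.
  intros Hc He. apply filterlim_locally with (eps := mkposreal eps He) in Hc.
  destruct Hc as [d Hd]. exists d. split; [apply cond_pos|]. intros y Hy. apply (Hd y Hy).
Qed.

Definition extl (f : R -> R) (L : R) t := if Rle_dec t 0 then L else f t.

Lemma extl_pos f L t : 0 < t -> extl f L t = f t.
Proof. intros H; unfold extl; destruct (Rle_dec t 0); [lra|reflexivity]. Qed.

Lemma continuous_extl (f : R -> R) L b :
  (forall t, 0 < t <= b -> continuous f t) -> filterlim f (at_right 0) (locally L) ->
  forall t, t <= b -> continuous (extl f L) t.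
Proof.
  intros Hc Hl t Ht. destruct (Rtotal_order t 0) as [H|[->|H]].
  - apply continuous_ext_loc with (fun _ => L); [|apply continuous_const].
    apply locally_interval with m_infty (Finite 0); [exact I|exact H|].
    intros y _ Hy. unfold extl. destruct (Rle_dec y 0); [reflexivity|simpl in Hy; lra].
  - apply filterlim_locally. intros eps.
    destruct (proj1 (filterlim_locally _ _) Hl eps) as [d Hd]. exists d. intros y Hy.
    unfold extl. destruct (Rle_dec 0 0); [|lra]. destruct (Rle_dec y 0).
    + apply ball_center.
    + apply Hd; [exact Hy|lra].
  - apply continuous_ext_loc with f; [|apply Hc; lra].
    apply locally_interval with (Finite 0) p_infty; [exact H|exact I|].
    intros y Hy _. symmetry. apply extl_pos, Hy.
Qed.

Lemma ex_RInt_continuous_R (g : R -> R) a b c d : a <= c -> c <= d -> d <= b ->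
  (forall t, a <= t <= b -> continuous g t) -> ex_RInt g c d.
Proof.
  intros Hac Hcd Hdb Hc. apply (ex_RInt_continuous (V := R_CompleteNormedModule)).
  intros z Hz. rewrite Rmin_left, Rmax_right in Hz by lra. apply Hc. lra.
Qed.

Lemma RInt_ext_continuous (f g : R -> R) a b : a <= b ->
  (forall t, a <= t <= b -> continuous g t) -> (forall t, a < t < b -> f t = g t) ->
  ex_RInt f a b /\ RInt f a b = RInt g a b.
Proof.
  intros Hab Hc Hfg. split.
  - apply (ex_RInt_ext g); [|now apply (ex_RInt_continuous_R g a b)].
    intros x Hx. rewrite Rmin_left, Rmax_right in Hx by lra. symmetry. now apply Hfg.
  - apply RInt_ext. intros x Hx. rewrite Rmin_left, Rmax_right in Hx by lra. now apply Hfg.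
Qed.

Lemma RInt_constR a b (k : R) : RInt (fun _ => k) a b = (b - a) * k.
Proof. apply (RInt_const (V := R_CompleteNormedModule)). Qed.

Lemma ex_RInt_constR a b (k : R) : ex_RInt (fun _ => k) a b.
Proof. exists (scal (b - a) k). apply (is_RInt_const (V := R_NormedModule)). Qed.

Lemma RInt_plusR (f g : R -> R) a b : ex_RInt f a b -> ex_RInt g a b ->
  RInt (fun t => f t + g t) a b = RInt f a b + RInt g a b.
Proof. apply (RInt_plus (V := R_CompleteNormedModule)). Qed.

Lemma ex_RInt_plusR (f g : R -> R) a b : ex_RInt f a b -> ex_RInt g a b ->
  ex_RInt (fun t => f t + g t) a b.
Proof. apply (ex_RInt_plus (V := R_NormedModule)). Qed.

Lemma RInt_minusR (f g : R -> R) a b : ex_RInt f a b -> ex_RInt g a b ->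
  RInt (fun t => f t - g t) a b = RInt f a b - RInt g a b.
Proof. apply (RInt_minus (V := R_CompleteNormedModule)). Qed.

Lemma RInt_scalR (f : R -> R) a b k : ex_RInt f a b ->
  RInt (fun t => k * f t) a b = k * RInt f a b.
Proof. apply (RInt_scal (V := R_CompleteNormedModule)). Qed.

Lemma ex_RInt_scalR (f : R -> R) a b k : ex_RInt f a b -> ex_RInt (fun t => k * f t) a b.
Proof. apply (ex_RInt_scal (V := R_NormedModule)). Qed.

Lemma RInt_ChaslesR (f : R -> R) a b c : ex_RInt f a b -> ex_RInt f b c ->
  RInt f a b + RInt f b c = RInt f a c.
Proof. apply (RInt_Chasles (V := R_CompleteNormedModule)). Qed.

Lemma RInt_ge0 (g : R -> R) a b : a <= b -> ex_RInt g a b ->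
  (forall t, a < t < b -> 0 <= g t) -> 0 <= RInt g a b.
Proof.
  intros Hab Hex Hg. rewrite <- (Rmult_0_r (b - a)), <- RInt_constR.
  apply RInt_le; auto using ex_RInt_constR.
Qed.

Lemma RInt_le_const (g : R -> R) a b k : a <= b -> ex_RInt g a b ->
  (forall t, a < t < b -> g t <= k) -> RInt g a b <= (b - a) * k.
Proof.
  intros Hab Hex Hg. rewrite <- RInt_constR. apply RInt_le; auto using ex_RInt_constR.
Qed.

Lemma RInt_gt0 (g : R -> R) a b c : a < c < b ->
  (forall t, a <= t <= b -> continuous g t) ->
  (forall t, a <= t <= b -> 0 <= g t) -> 0 < g c -> 0 < RInt g a b.
Proof.
  intros Hc Hcont Hg Hgc.
  destruct (continuous_eps g c (g c / 2) (Hcont c ltac:(lra)) ltac:(lra)) as [d [Hd Hnear]].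
  set (h := Rmin (d / 2) (Rmin ((c - a) / 2) ((b - c) / 2))).
  assert (Hh : 0 < h /\ h <= d / 2 /\ h <= (c - a) / 2 /\ h <= (b - c) / 2).
  { unfold h. repeat split; repeat apply Rmin_glb_lt; try lra;
      eauto using Rmin_l, Rle_trans, Rmin_r. }
  assert (Hex : forall x y, a <= x -> x <= y -> y <= b -> ex_RInt g x y)
    by (intros; now apply (ex_RInt_continuous_R g a b)).
  rewrite <- (RInt_ChaslesR g a (c - h) b), <- (RInt_ChaslesR g (c - h) (c + h) b)
    by (apply Hex; lra).
  assert (0 <= RInt g a (c - h)) by (apply RInt_ge0; [lra|apply Hex; lra|intros; apply Hg; lra]).
  assert (0 <= RInt g (c + h) b) by (apply RInt_ge0; [lra|apply Hex; lra|intros; apply Hg; lra]).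
  assert ((c + h - (c - h)) * (g c / 2) <= RInt g (c - h) (c + h)).
  { rewrite <- RInt_constR. apply RInt_le; [lra|apply ex_RInt_constR|apply Hex; lra|].
    intros x Hx. assert (Hx' : Rabs (g x - g c) < g c / 2) by (apply Hnear, Rabs_def1; lra).
    apply Rabs_def2 in Hx'. lra. }
  assert (0 < (c + h - (c - h)) * (g c / 2)) by (apply Rmult_lt_0_compat; lra).
  lra.
Qed.

Definition clamp (a b t : R) := Rmax a (Rmin t b).

Lemma clamp_id a b t : a <= t <= b -> clamp a b t = t.
Proof. intros Ht. unfold clamp. rewrite Rmin_left, Rmax_right; lra. Qed.

Lemma clamp_range a b t : a <= b -> a <= clamp a b t <= b.
Proof.
  intros Hab. unfold clamp. split; [apply Rmax_l|].
  apply Rmax_lub; [exact Hab|apply Rmin_r].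
Qed.

Lemma continuous_clamp a b x : continuous (clamp a b) x.
Proof.
  apply filterlim_locally. intros eps. exists eps. intros y Hy.
  unfold ball in Hy |- *; simpl in Hy |- *; unfold AbsRing_ball, abs, minus, plus, opp in Hy |- *;
    simpl in Hy |- *.
  apply Rabs_def2 in Hy. apply Rabs_def1; unfold clamp, Rmax, Rmin;
    repeat destruct Rle_dec; lra.
Qed.

(* [G] is clamped to [[a, b]] so that [x |-> RInt G a x] is differentiable everywhere and
   the mean value theorem applies to [x |-> RInt G a x - F x] on [[a, b]]. *)
Lemma RInt_FTC (F G : R -> R) a b : a <= b ->
  (forall t, a <= t <= b -> continuous G t) ->
  continuous F a -> continuous F b -> (forall t, a < t < b -> is_derive F t (G t)) ->
  RInt G a b = F b - F a.
Proof.
  intros Hab HG HFa HFb HF.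
  set (Gc := fun t => G (clamp a b t)).
  assert (HGc : forall t, continuous Gc t).
  { intros t. apply (continuous_Rcomp (clamp a b) G); [apply continuous_clamp|].
    apply HG, clamp_range, Hab. }
  assert (HIGc : forall x, is_derive (fun y => RInt Gc a y) x (Gc x)).
  { intros x. apply (is_derive_RInt (V := R_CompleteNormedModule) Gc _ a); [|apply HGc].
    apply filter_forall. intros y. apply (RInt_correct (V := R_CompleteNormedModule)).
    apply (ex_RInt_continuous (V := R_CompleteNormedModule)). intros z _. apply HGc. }
  assert (HIG : RInt G a b = RInt Gc a b).
  { apply RInt_ext. intros x Hx. rewrite Rmin_left, Rmax_right in Hx by lra.
    unfold Gc. rewrite clamp_id; lra. }
  destruct (MVT_gen (fun x => RInt Gc a x - F x) a b (fun _ => 0)) as [c [_ Hc]].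
  - intros x Hx. rewrite Rmin_left, Rmax_right in Hx by lra.
    replace 0 with (Gc x - G x) by (unfold Gc; rewrite clamp_id; lra).
    apply (is_derive_minus (fun y => RInt Gc a y) F x); [apply HIGc|apply HF, Hx].
  - intros x Hx. rewrite Rmin_left, Rmax_right in Hx by lra.
    apply continuity_pt_filterlim, continuous_Rminus.
    + apply (ex_derive_continuous (K := R_AbsRing) (V := R_NormedModule)).
      eexists. apply HIGc.
    + destruct (Req_dec x a) as [->|Ha]; [exact HFa|].
      destruct (Req_dec x b) as [->|Hb]; [exact HFb|].
      apply (ex_derive_continuous (K := R_AbsRing) (V := R_NormedModule)).
      eexists. apply HF. lra.
  - rewrite RInt_point in Hc. rewrite HIG. unfold zero in Hc; simpl in Hc. lra.
Qed.

(* Integrate [rpow_le_affine] at [x = f^q / A], where [A] is the integral on the right. *)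
Lemma RInt_rpow_jensen (w f : R -> R) a b q r : a <= b -> 0 < r < q ->
  ex_RInt w a b -> ex_RInt (fun t => w t * rpow (f t) q) a b ->
  ex_RInt (fun t => w t * rpow (f t) r) a b ->
  (forall t, a < t < b -> 0 <= w t /\ 0 <= f t) -> RInt w a b <= 1 ->
  0 < RInt (fun t => w t * rpow (f t) q) a b ->
  RInt (fun t => w t * rpow (f t) r) a b <= rpow (RInt (fun t => w t * rpow (f t) q) a b) (r / q).
Proof.
  intros Hab Hrq Hw Hq Hr Hpos Hmass HA.
  set (A := RInt (fun t => w t * rpow (f t) q) a b) in *.
  set (th := r / q).
  assert (Hth : 0 < th < 1).
  { unfold th. split; [apply Rdiv_lt_0_compat; lra|].
    apply Rmult_lt_reg_r with q; [lra|]. unfold Rdiv. rewrite Rmult_assoc, Rinv_l; lra. }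
  set (RA := rpow A th).
  assert (HRA : 0 < RA) by now apply rpow_gt0.
  assert (Hle : RInt (fun t => w t * rpow (f t) r) a b <=
                RInt (fun t => RA * th / A * (w t * rpow (f t) q) + RA * (1 - th) * w t) a b).
  { apply RInt_le; auto. { apply ex_RInt_plusR; now apply ex_RInt_scalR. }
    intros t Ht. destruct (Hpos t Ht) as [Hwt Hft].
    assert (Hx : 0 <= rpow (f t) q / A) by (apply Rdiv_le_0_compat; [apply rpow_ge0|exact HA]).
    pose proof (rpow_le_affine th _ Hth Hx) as Ham.
    unfold th in Ham. rewrite rpow_div_rpow in Ham by lra. fold th RA in Ham.
    replace (RA * th / A * (w t * rpow (f t) q) + RA * (1 - th) * w t) with
      (w t * (RA * (th * (rpow (f t) q / A) + (1 - th)))) by (field; lra).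
    apply Rmult_le_compat_l; [exact Hwt|].
    apply Rmult_le_reg_r with (/ RA); [now apply Rinv_0_lt_compat|].
    replace (RA * (th * (rpow (f t) q / A) + (1 - th)) * / RA)
      with (th * (rpow (f t) q / A) + (1 - th)) by (field; lra).
    exact Ham. }
  rewrite RInt_plusR, !RInt_scalR in Hle by auto using ex_RInt_scalR.
  fold A in Hle. replace (RA * th / A * A) with (RA * th) in Hle by (field; lra).
  assert (RA * (1 - th) * RInt w a b <= RA * (1 - th) * 1)
    by (apply Rmult_le_compat_l; [apply Rmult_le_pos|]; lra).
  fold th RA. nra.
Qed.

Lemma RInt_zero_outside (f : R -> R) a b c d : a <= c < d -> d <= b -> ex_RInt f a b ->
  (forall t, a < t < c -> f t = 0) -> (forall t, d < t < b -> f t = 0) ->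
  RInt f a b = RInt f c d.
Proof.
  intros Hc Hd Hex Hl Hr.
  assert (Eac : ex_RInt f a c) by (apply (ex_RInt_Chasles_1 f a c b); [lra|exact Hex]).
  assert (Ecb : ex_RInt f c b) by (apply (ex_RInt_Chasles_2 f a c b); [lra|exact Hex]).
  assert (Ecd : ex_RInt f c d) by (apply (ex_RInt_Chasles_1 f c d b); [lra|exact Ecb]).
  assert (Edb : ex_RInt f d b) by (apply (ex_RInt_Chasles_2 f c d b); [lra|exact Ecb]).
  rewrite <- (RInt_ChaslesR f a c b Eac Ecb), <- (RInt_ChaslesR f c d b Ecd Edb).
  rewrite (RInt_ext f (fun _ => 0) a c), (RInt_ext f (fun _ => 0) d b), !RInt_constR.
  - rewrite !Rmult_0_r, Rplus_0_l, Rplus_0_r. reflexivity.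
  - intros x Hx. rewrite Rmin_left, Rmax_right in Hx by lra. apply Hr, Hx.
  - intros x Hx. rewrite Rmin_left, Rmax_right in Hx by lra. apply Hl, Hx.
Qed.

Lemma RInt_Rpower_le M t b : 2 < M -> 0 < t <= b ->
  RInt (fun s => Rpower s (1 - M)) t b <= Rpower t (2 - M) / (M - 2).
Proof.
  intros HM Htb.
  assert (HI : is_RInt (fun s => Rpower s (1 - M)) t b
                 (/ (2 - M) * Rpower b (2 - M) - / (2 - M) * Rpower t (2 - M))).
  { apply (is_RInt_derive (fun s => / (2 - M) * Rpower s (2 - M))); intros x Hx;
      rewrite Rmin_left, Rmax_right in Hx by lra.
    - apply is_derive_Reals.
      replace (Rpower x (1 - M)) with (/ (2 - M) * ((2 - M) * Rpower x (2 - M - 1)))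
        by (replace (2 - M - 1) with (1 - M) by ring; field; lra).
      apply (derivable_pt_lim_scal (fun s => Rpower s (2 - M))), derivable_pt_lim_power. lra.
    - apply (ex_derive_continuous (K := R_AbsRing) (V := R_NormedModule)).
      eexists. apply is_derive_Reals, derivable_pt_lim_power. lra. }
  rewrite (is_RInt_unique _ _ _ _ HI). pose proof (exp_pos ((2 - M) * ln b)).
  unfold Rpower in *. unfold Rdiv.
  replace (/ (2 - M)) with (- / (M - 2)) by (field; lra).
  assert (0 < / (M - 2)) by (apply Rinv_0_lt_compat; lra). nra.
Qed.

Lemma two_mul_abs_le l w d : 0 < w -> 2 * l * Rabs d <= l ^ 2 * / w + w * d ^ 2.
Proof.
  intros Hw. rewrite <- (pow2_abs d).
  assert (0 <= (l - w * Rabs d) ^ 2 / w) by (apply Rdiv_le_0_compat; [apply pow2_ge_0|lra]).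
  replace (l ^ 2 * / w + w * Rabs d ^ 2) with ((l - w * Rabs d) ^ 2 / w + 2 * l * Rabs d)
    by (field; lra).
  lra.
Qed.

Lemma sq_le_of_forall_amgm x K E : 0 < K -> 0 <= E ->
  (forall l, 0 < l -> 2 * l * Rabs x <= l ^ 2 * K + E) -> x ^ 2 <= E * K.
Proof.
  intros HK HE Hamgm. destruct (Req_dec x 0) as [->|Hx]; [simpl; nra|].
  assert (Hax : 0 < Rabs x) by now apply Rabs_pos_lt.
  specialize (Hamgm (Rabs x / K) ltac:(now apply Rdiv_lt_0_compat)).
  rewrite <- pow2_abs.
  replace (2 * (Rabs x / K) * Rabs x) with (2 * (Rabs x ^ 2 / K)) in Hamgm by (field; lra).
  replace ((Rabs x / K) ^ 2 * K) with (Rabs x ^ 2 / K) in Hamgm by (field; lra).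
  apply Rmult_le_reg_r with (/ K); [now apply Rinv_0_lt_compat|].
  rewrite Rmult_assoc, Rinv_r, Rmult_1_r by lra. unfold Rdiv in Hamgm. lra.
Qed.

(** * Lower limits from the left *)

Lemma Rbar_lub_ub (E : Rbar -> Prop) x : E x -> Rbar_le x (Rbar_lub E).
Proof. unfold Rbar_lub. destruct (Rbar_ex_lub E) as [l [Hub Hleast]]. apply Hub. Qed.

Lemma Rbar_lub_least (E : Rbar -> Prop) l :
  (forall x, E x -> Rbar_le x l) -> Rbar_le (Rbar_lub E) l.
Proof. unfold Rbar_lub. destruct (Rbar_ex_lub E) as [m [Hub Hleast]]. apply Hleast. Qed.

Lemma Rbar_glb_lb (E : Rbar -> Prop) x : E x -> Rbar_le (Rbar_glb E) x.
Proof. unfold Rbar_glb. destruct (Rbar_ex_glb E) as [l [Hlb Hgreat]]. apply Hlb. Qed.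

Lemma Rbar_glb_greatest (E : Rbar -> Prop) l :
  (forall x, E x -> Rbar_le l x) -> Rbar_le l (Rbar_glb E).
Proof. unfold Rbar_glb. destruct (Rbar_ex_glb E) as [m [Hlb Hgreat]]. apply Hgreat. Qed.

Lemma liminf_left_ge (f : R -> R) a L :
  (forall eps, 0 < eps -> exists d, 0 < d /\ forall p, a - d < p < a -> L - eps <= f p) ->
  Rbar_le (Finite L) (liminf_left f a).
Proof.
  intros Happrox.
  assert (K : forall eps, 0 < eps -> Rbar_le (Finite (L - eps)) (liminf_left f a)).
  { intros eps He. destruct (Happrox eps He) as [d [Hd Hf]]. unfold liminf_left.
    eapply Rbar_le_trans; [|apply Rbar_lub_ub; exists d; split; [exact Hd|reflexivity]].
    apply Rbar_glb_greatest. intros z [p [Hp ->]]. apply Hf, Hp. }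
  destruct (liminf_left f a) as [l| |]; simpl; [|exact I|].
  - apply Rnot_lt_le. intros Hl. specialize (K ((L - l) / 2) ltac:(lra)). simpl in K. lra.
  - apply (K 1 Rlt_0_1).
Qed.

Lemma liminf_left_ge_continuous (f g : R -> R) a d : 0 < d -> continuous g a ->
  (forall p, a - d < p < a -> g p <= f p) -> Rbar_le (Finite (g a)) (liminf_left f a).
Proof.
  intros Hd Hg Hfg. apply liminf_left_ge. intros eps He.
  destruct (continuous_eps g a eps Hg He) as [d1 [Hd1 Hnear]].
  exists (Rmin d d1). split; [now apply Rmin_glb_lt|].
  intros p Hp. pose proof (Rmin_l d d1). pose proof (Rmin_r d d1).
  assert (Hp' : Rabs (g p - g a) < eps) by (apply Hnear; rewrite Rabs_left; lra).
  apply Rabs_def2 in Hp'. specialize (Hfg p ltac:(lra)). lra.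
Qed.

Lemma liminf_left_le (f g : R -> R) a d : 0 < d ->
  (forall p, a - d < p < a -> f p <= g p) -> Rbar_le (liminf_left f a) (liminf_left g a).
Proof.
  intros Hd Hfg. apply Rbar_lub_least. intros y [d1 [Hd1 ->]].
  pose proof (Rmin_l d1 d). pose proof (Rmin_r d1 d). set (d2 := Rmin d1 d) in *.
  apply Rbar_le_trans with
    (Rbar_glb (fun z => exists p, a - d2 < p < a /\ z = Finite (f p))).
  - apply Rbar_glb_subset. intros z [p [Hp ->]]. exists p. split; [lra|reflexivity].
  - eapply Rbar_le_trans; [|apply Rbar_lub_ub; exists d2; split;
      [now apply Rmin_glb_lt|reflexivity]].
    apply Rbar_glb_greatest. intros z [p [Hp ->]].
    eapply Rbar_le_trans; [apply Rbar_glb_lb; exists p; split; [exact Hp|reflexivity]|].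
    simpl. apply Hfg. lra.
Qed.

Lemma liminf_left_ext (f g : R -> R) a d : 0 < d ->
  (forall p, a - d < p < a -> f p = g p) -> liminf_left f a = liminf_left g a.
Proof.
  intros Hd Hfg. apply Rbar_le_antisym; apply (liminf_left_le _ _ _ d Hd);
    intros p Hp; rewrite Hfg by exact Hp; apply Rle_refl.
Qed.

(** * Weighted integrals on (0, 1] *)

Lemma continuous_wgt M t : 1 < M -> continuous (wgt M) t.
Proof. intros HM. apply continuous_rpow. lra. Qed.

Lemma wgt_ge0 M t : 0 <= wgt M t.
Proof. apply rpow_ge0. Qed.

Lemma wgt_gt0 M t : 0 < t -> 0 < wgt M t.
Proof. apply rpow_gt0. Qed.

Lemma wgt_le1 M t : 1 < M -> t <= 1 -> wgt M t <= 1.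
Proof.
  intros HM Ht. unfold wgt. destruct (Rle_dec t 0); [rewrite rpow_le0; lra|].
  rewrite rpowE by lra. replace 1 with (Rpower 1 (M - 1)) at 2.
  - apply Rle_Rpower_l; lra.
  - unfold Rpower. now rewrite ln_1, Rmult_0_r, exp_0.
Qed.

Lemma continuous_wgt_comp M (g Phi : R -> R) t : 1 < M -> continuous g t ->
  (forall x, continuous Phi x) -> continuous (fun s => wgt M s * Phi (g s)) t.
Proof.
  intros HM Hg HPhi. apply continuous_Rmult; [now apply continuous_wgt|].
  apply (continuous_Rcomp g Phi); [exact Hg|apply HPhi].
Qed.

Lemma filterlim_at_right_of_continuous (f g : R -> R) d : 0 < d ->
  (forall t, 0 < t < d -> f t = g t) -> continuous g 0 ->
  filterlim f (at_right 0) (locally (g 0)).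
Proof.
  intros Hd Hfg Hg. apply filterlim_ext_loc with g.
  - exists (mkposreal d Hd). intros y Hy Hy0. symmetry. apply Hfg. split; [exact Hy0|].
    unfold ball in Hy; simpl in Hy; unfold AbsRing_ball, abs, minus, plus, opp in Hy; simpl in Hy.
    apply Rabs_def2 in Hy. lra.
  - eapply filterlim_filter_le_1; [|exact Hg].
    intros P [e He]. exists e. intros y Hy _. now apply He.
Qed.

(* Extending [K] by its limit makes [z |-> RInt _ z 1] continuous at [0]. *)
Lemma wint_RInt M (K : R -> R) L : 1 < M ->
  (forall t, 0 < t <= 1 -> continuous K t) -> filterlim K (at_right 0) (locally L) ->
  ex_RInt (fun t => wgt M t * K t) 0 1 /\
  wint_ex M K /\ wint M K = RInt (fun t => wgt M t * K t) 0 1.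
Proof.
  intros HM Hc Hl.
  set (g := fun t => wgt M t * extl K L t).
  assert (Hg : forall t, t <= 1 -> continuous g t).
  { intros t Ht. apply continuous_Rmult; [now apply continuous_wgt|].
    now apply (continuous_extl K L 1). }
  assert (HgK : forall t, 0 < t -> g t = wgt M t * K t)
    by (intros t Ht; unfold g; now rewrite extl_pos).
  set (If := fun z => RInt g z 1).
  assert (HIf : forall z, z <= 1 -> is_RInt g z 1 (If z)).
  { intros z Hz. apply (RInt_correct (V := R_CompleteNormedModule)).
    apply (ex_RInt_continuous_R g z 1); try lra. intros; apply Hg; lra. }
  assert (Hcont : continuous If 0).
  { apply (continuous_RInt_2 (V := R_NormedModule) g 0 1 If).
    apply locally_interval with m_infty (Finite 1); simpl; try lra.
    intros z _ Hz. apply HIf. lra. }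
  assert (Hgen : is_RInt_gen (fun t => wgt M t * K t) (at_right 0) (at_point 1) (If 0)).
  { intros P [eps HP]. destruct (proj1 (filterlim_locally _ _) Hcont eps) as [d Hd].
    apply Filter_prod with (fun x => 0 < x < Rmin d 1) (fun y => y = 1).
    - assert (Hm : 0 < Rmin d 1) by (apply Rmin_glb_lt; [apply cond_pos|lra]).
      exists (mkposreal _ Hm). intros x Hx Hx0. split; [exact Hx0|].
      unfold ball in Hx; simpl in Hx; unfold AbsRing_ball, abs, minus, plus, opp in Hx; simpl in Hx.
      apply Rabs_def2 in Hx. lra.
    - reflexivity.
    - intros x y Hx ->. pose proof (Rmin_l d 1). pose proof (Rmin_r d 1).
      exists (If x). split.
      + apply (is_RInt_ext (V := R_NormedModule) g); [|apply HIf; lra].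
        intros t Ht. simpl in Ht. rewrite Rmin_left, Rmax_right in Ht by lra. apply HgK. lra.
      + apply HP, Hd.
        unfold ball; simpl; unfold AbsRing_ball, abs, minus, plus, opp; simpl.
        apply Rabs_def1; lra. }
  split; [|split; [now exists (If 0)|]].
  { apply (ex_RInt_ext g); [|exists (If 0); apply HIf; lra].
    intros t Ht. rewrite Rmin_left, Rmax_right in Ht by lra. apply HgK. lra. }
  unfold wint. rewrite (is_RInt_gen_unique _ _ Hgen).
  unfold If. apply RInt_ext. intros t Ht. rewrite Rmin_left, Rmax_right in Ht by lra.
  apply HgK. lra.
Qed.

Lemma wint_RInt_supported M (K k : R -> R) a b : 1 < M -> 0 <= a < b -> b <= 1 ->
  (forall t, 0 < t <= 1 -> continuous K t) -> (exists L, filterlim K (at_right 0) (locally L)) ->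
  (forall t, 0 < t <= 1 -> ~ a < t < b -> K t = 0) -> (forall t, a < t < b -> K t = k t) ->
  wint_ex M K /\ wint M K = RInt (fun t => wgt M t * k t) a b.
Proof.
  intros HM Hab Hb HK [L HKl] Hout Hin.
  destruct (wint_RInt M K L) as [Hex [Hw ->]]; try assumption.
  split; [exact Hw|]. rewrite (RInt_zero_outside _ 0 1 a b); try assumption; try lra.
  - apply RInt_ext. intros x Hx. rewrite Rmin_left, Rmax_right in Hx by lra. now rewrite Hin.
  - intros t Ht. rewrite Hout by lra. ring.
  - intros t Ht. rewrite Hout by lra. ring.
Qed.

Lemma S_M_le_quotient M (u : R -> R) : 0 < S_M M -> H10M M u ->
  (exists t, 0 < t < 1 /\ u t <> 0) ->
  wint_ex M (fun t => rpow (Rabs (u t)) (2 * M / (M - 2))) ->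
  S_M M <= wint M (fun t => Derive u t ^ 2) /
           rpow (wint M (fun t => rpow (Rabs (u t)) (2 * M / (M - 2)))) ((M - 2) / M).
Proof.
  intros HS Hu Hnz Hq. unfold S_M in *.
  match goal with |- real (Rbar_glb ?P) <= ?x =>
    assert (Hle : Rbar_le (Rbar_glb P) (Finite x)) by (apply Rbar_glb_lb; now exists u) end.
  destruct (Rbar_glb _) as [s| |]; simpl in *; lra.
Qed.

(** * A C^1 truncation *)

(* Composed with [V] and extended by [0] outside a nodal zone, [psi eps] yields an admissible
   test function for [S_M]. *)
Definition psi (eps x : R) := if Rle_dec x eps then 0 else (x - eps) ^ 2 / x.
Definition dpsi (eps x : R) := if Rle_dec x eps then 0 else 1 - eps ^ 2 / x ^ 2.

Lemma psi_small eps x : x <= eps -> psi eps x = 0.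
Proof. intros; unfold psi; destruct (Rle_dec x eps); lra. Qed.

Lemma dpsi_small eps x : x <= eps -> dpsi eps x = 0.
Proof. intros; unfold dpsi; destruct (Rle_dec x eps); lra. Qed.

Lemma is_derive_psi eps x : 0 < eps -> is_derive (psi eps) x (dpsi eps x).
Proof.
  intros He. destruct (Rtotal_order x eps) as [H|[<-|H]].
  - rewrite dpsi_small by lra. apply is_derive_ext_loc with (fun _ => 0).
    + apply locally_interval with m_infty (Finite eps); [exact I|exact H|].
      intros y _ Hy. symmetry. apply psi_small. simpl in Hy. lra.
    + apply (is_derive_const (K := R_AbsRing) (V := R_NormedModule)).
  - rewrite dpsi_small by lra. apply is_derive_Reals. intros e He'.
    assert (Hd : 0 < Rmin (x / 2) (e * x / 2)) by (apply Rmin_glb_lt; nra).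
    exists (mkposreal _ Hd). intros h Hh0 Hh. simpl in Hh.
    pose proof (Rmin_l (x / 2) (e * x / 2)). pose proof (Rmin_r (x / 2) (e * x / 2)).
    rewrite (psi_small x x) by lra.
    destruct (Rle_dec (x + h) x) as [Hle|Hgt].
    + rewrite psi_small by lra. replace ((0 - 0) / h - 0) with 0 by (field; auto).
      rewrite Rabs_R0. lra.
    + unfold psi. destruct (Rle_dec (x + h) x) as [|_]; [lra|].
      rewrite Rabs_pos_eq in Hh by lra.
      replace (((x + h - x) ^ 2 / (x + h) - 0) / h - 0) with (h / (x + h)) by (field; lra).
      rewrite Rabs_pos_eq by (apply Rdiv_le_0_compat; lra).
      apply Rmult_lt_reg_r with (x + h); [lra|].
      unfold Rdiv. rewrite Rmult_assoc, Rinv_l, Rmult_1_r by lra. nra.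
  - unfold dpsi. destruct (Rle_dec x eps); [lra|].
    apply is_derive_ext_loc with (fun y => (y - eps) ^ 2 / y).
    + apply locally_interval with (Finite eps) p_infty; [exact H|exact I|].
      intros y Hy _. unfold psi. simpl in Hy. destruct (Rle_dec y eps); [lra|reflexivity].
    + auto_derive; [lra|]. field. lra.
Qed.

Lemma continuous_dpsi eps x : 0 < eps -> continuous (dpsi eps) x.
Proof.
  intros He.
  assert (Hsm : forall y, 0 < y -> continuous (fun z => 1 - eps ^ 2 / z ^ 2) y).
  { intros y Hy. apply (ex_derive_continuous (K := R_AbsRing) (V := R_NormedModule)).
    auto_derive. nra. }
  destruct (Rtotal_order x eps) as [H|[<-|H]].
  - apply continuous_ext_loc with (fun _ => 0); [|apply continuous_const].
    apply locally_interval with m_infty (Finite eps); [exact I|exact H|].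
    intros y _ Hy. symmetry. apply dpsi_small. simpl in Hy. lra.
  - apply filterlim_locally. intros e.
    destruct (proj1 (filterlim_locally _ _) (Hsm x He) e) as [d Hd].
    exists d. intros y Hy. rewrite (dpsi_small x x) by lra.
    unfold dpsi. destruct (Rle_dec y x); [apply ball_center|].
    replace 0 with (1 - x ^ 2 / x ^ 2) by (field; lra). now apply Hd.
  - apply continuous_ext_loc with (fun z => 1 - eps ^ 2 / z ^ 2); [|apply Hsm; lra].
    apply locally_interval with (Finite eps) p_infty; [exact H|exact I|].
    intros y Hy _. unfold dpsi. simpl in Hy. destruct (Rle_dec y eps); [lra|reflexivity].
Qed.

Lemma psi_bounds eps x : 0 < eps -> 0 <= x -> 0 <= psi eps x <= x /\ x - 2 * eps <= psi eps x.
Proof.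
  intros He Hx. unfold psi. destruct (Rle_dec x eps); [lra|].
  assert (0 <= (x - eps) ^ 2 / x) by (apply Rdiv_le_0_compat; [apply pow2_ge_0|lra]).
  replace ((x - eps) ^ 2 / x) with (x - 2 * eps + eps ^ 2 / x) in * by (field; lra).
  assert (0 < eps ^ 2 / x) by (apply Rdiv_lt_0_compat; nra).
  assert (eps ^ 2 / x <= eps).
  { apply Rmult_le_reg_r with x; [lra|].
    unfold Rdiv. rewrite Rmult_assoc, Rinv_l by lra. nra. }
  lra.
Qed.

Lemma dpsi_bounds eps x : 0 < eps -> 0 <= dpsi eps x <= 1.
Proof.
  intros He. unfold dpsi. destruct (Rle_dec x eps); [lra|].
  assert (0 < eps ^ 2 / x ^ 2) by (apply Rdiv_lt_0_compat; nra).
  assert (eps ^ 2 / x ^ 2 <= 1).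
  { apply Rmult_le_reg_r with (x ^ 2); [nra|].
    unfold Rdiv. rewrite Rmult_assoc, Rinv_l by nra. nra. }
  lra.
Qed.

(* The even extension [Psi eps s = psi eps |s|], written so that it is visibly C^1. *)
Definition Psi eps s := psi eps s + psi eps (- s).
Definition dPsi eps s := dpsi eps s - dpsi eps (- s).

Lemma is_derive_Psi eps s : 0 < eps -> is_derive (Psi eps) s (dPsi eps s).
Proof.
  intros He. unfold Psi, dPsi.
  apply (is_derive_plus (K := R_AbsRing) (V := R_NormedModule)); [now apply is_derive_psi|].
  replace (- dpsi eps (- s)) with (scal (-1) (dpsi eps (- s)))
    by (unfold scal; simpl; unfold mult; simpl; ring).
  apply (is_derive_comp (psi eps) Ropp); [now apply is_derive_psi|].
  apply (is_derive_opp (K := R_AbsRing) (V := R_NormedModule) (fun y => y)).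
  apply (is_derive_id (K := R_AbsRing)).
Qed.

Lemma continuous_Psi eps s : 0 < eps -> continuous (Psi eps) s.
Proof.
  intros He. apply (ex_derive_continuous (K := R_AbsRing) (V := R_NormedModule)).
  eexists. now apply is_derive_Psi.
Qed.

Lemma continuous_dPsi eps s : 0 < eps -> continuous (dPsi eps) s.
Proof.
  intros He. apply continuous_Rminus; [now apply continuous_dpsi|].
  apply (continuous_Rcomp Ropp (dpsi eps));
    [apply (continuous_opp (fun y : R => y)), continuous_id|].
  now apply continuous_dpsi.
Qed.

Lemma Psi_abs eps s : 0 < eps -> Psi eps s = psi eps (Rabs s).
Proof.
  intros He. unfold Psi. destruct (Rle_dec 0 s).
  - rewrite Rabs_pos_eq, (psi_small eps (- s)) by lra. ring.
  - rewrite Rabs_left, (psi_small eps s) by lra. ring.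
Qed.

Lemma Psi_gt0 eps s : 0 < eps < Rabs s -> 0 < Psi eps s.
Proof.
  intros He. rewrite Psi_abs by lra. unfold psi. destruct (Rle_dec (Rabs s) eps); [lra|].
  apply Rdiv_lt_0_compat; [apply pow_lt|]; lra.
Qed.

Lemma dPsi_abs_le1 eps s : 0 < eps -> Rabs (dPsi eps s) <= 1.
Proof.
  intros He. unfold dPsi. destruct (Rle_dec 0 s).
  - rewrite (dpsi_small eps (- s)) by lra. pose proof (dpsi_bounds eps s He).
    rewrite Rabs_pos_eq; lra.
  - rewrite (dpsi_small eps s) by lra. pose proof (dpsi_bounds eps (- s) He).
    rewrite Rabs_left1; lra.
Qed.

Lemma Psi_small eps s : Rabs s <= eps -> Psi eps s = 0 /\ dPsi eps s = 0.
Proof.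
  intros Hs. apply Rabs_le_between in Hs. unfold Psi, dPsi.
  rewrite !psi_small, !dpsi_small by lra. split; ring.
Qed.

(** * Nodal zones *)

Lemma maxabs_attained (V : R -> R) a b s : a <= s <= b ->
  (forall t, a <= t <= b -> Rabs (V t) <= Rabs (V s)) -> maxabs V a b = Rabs (V s).
Proof.
  intros Hs Hmax. unfold maxabs.
  rewrite (is_lub_Rbar_unique _ (Finite (Rabs (V s)))); [reflexivity|]. split.
  - intros y [t [Ht ->]]. simpl. now apply Hmax.
  - intros m Hm. apply Hm. now exists s.
Qed.

Record nodal_zone (V : R -> R) (a b : R) : Prop := {
  zone_ge0 : 0 <= a;
  zone_lt : a < b;
  zone_le1 : b <= 1;
  zone_left : a = 0 \/ V a = 0;
  zone_right : V b = 0;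
  zone_ne0 : forall t, a < t < b -> V t <> 0 }.

Lemma nodal_points_le m V tz j k : nodal_points m V tz -> (j <= k <= m)%nat -> tz j <= tz k.
Proof.
  intros (_ & _ & Hinc & _) Hjk. induction k as [|k IH].
  - replace j with 0%nat by lia. lra.
  - destruct (Nat.eq_dec j (S k)) as [->|Hne]; [lra|].
    specialize (IH ltac:(lia)). specialize (Hinc k ltac:(lia)). lra.
Qed.

Lemma nodal_points_zone m V tz i : nodal_points m V tz -> (i < m)%nat ->
  nodal_zone V (tz i) (tz (S i)).
Proof.
  intros Hn Hi. pose proof Hn as (H0 & Hm & Hinc & Hzero & Hall).
  assert (Hle : forall j k, (j <= k <= m)%nat -> tz j <= tz k)
    by (intros; now apply (nodal_points_le m V)).
  assert (Ha : 0 <= tz i) by (rewrite <- H0; apply Hle; lia).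
  assert (Hb : tz (S i) <= 1) by (rewrite <- Hm; apply Hle; lia).
  specialize (Hinc i Hi). split; try assumption.
  - destruct i as [|i]; [now left|right]. apply Hzero. lia.
  - apply Hzero. lia.
  - intros t Ht HVt.
    destruct (Hall t ltac:(lra) HVt) as [j [Hj ->]].
    destruct (Nat.le_gt_cases j i) as [Hji|Hji].
    + assert (tz j <= tz i) by (apply Hle; lia). lra.
    + assert (tz (S i) <= tz j) by (apply Hle; lia). lra.
Qed.

Definition restrict (a b : R) (f : R -> R) t :=
  if Rlt_dec a t then if Rlt_dec t b then f t else 0 else 0.

Lemma restrict_in a b f t : a < t < b -> restrict a b f t = f t.
Proof. intros Ht. unfold restrict. destruct (Rlt_dec a t), (Rlt_dec t b); lra || reflexivity. Qed.

Lemma restrict_out a b f t : ~ (a < t < b) -> restrict a b f t = 0.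
Proof. intros Ht. unfold restrict. destruct (Rlt_dec a t), (Rlt_dec t b); lra || reflexivity. Qed.

Section NodalZone.

Variables (M p : R) (V : R -> R) (a b : R).
Hypotheses (HM : 2 < M) (Hp : 1 < p) (HV : radial_sol M p V) (Hz : nodal_zone V a b).

(* Extensions of [V] and [V'] continuous on [(-oo, 1]], so that an endpoint [a = 0] is
   handled like any other. *)
Local Notation Vc := (extl V (V 0)).
Local Notation dVc := (extl (Derive V) 0).

Lemma radial_sol_is_derive t : 0 < t <= 1 -> is_derive V t (Derive V t).
Proof. intros Ht. apply Derive_correct, HV, Ht. Qed.

Lemma radial_sol_continuous t : 0 < t <= 1 -> continuous V t.
Proof.
  intros Ht. apply (ex_derive_continuous (K := R_AbsRing) (V := R_NormedModule)).
  eexists. now apply radial_sol_is_derive.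
Qed.

Lemma radial_sol_continuous_Derive t : 0 < t <= 1 -> continuous (Derive V) t.
Proof. intros Ht. apply HV, Ht. Qed.

Lemma continuous_Vc t : t <= 1 -> continuous Vc t.
Proof. apply continuous_extl; [apply radial_sol_continuous|apply HV]. Qed.

Lemma continuous_dVc t : t <= 1 -> continuous dVc t.
Proof. apply continuous_extl; [apply radial_sol_continuous_Derive|apply HV]. Qed.

Lemma zone_RInt_comp (Phi g gc : R -> R) : (forall x, continuous Phi x) ->
  (forall t, t <= 1 -> continuous gc t) -> (forall t, 0 < t -> g t = gc t) ->
  ex_RInt (fun t => wgt M t * Phi (g t)) a b /\
  RInt (fun t => wgt M t * Phi (g t)) a b = RInt (fun t => wgt M t * Phi (gc t)) a b.
Proof.
  intros HPhi Hgc Hg. pose proof (zone_ge0 _ _ _ Hz). pose proof (zone_le1 _ _ _ Hz).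
  apply RInt_ext_continuous; [pose proof (zone_lt _ _ _ Hz); lra| |].
  - intros t Ht. apply continuous_Rmult; [apply continuous_wgt; lra|].
    apply (continuous_Rcomp gc Phi); [apply Hgc; lra|apply HPhi].
  - intros t Ht. rewrite Hg by lra. reflexivity.
Qed.

Lemma zone_RInt_V (Phi : R -> R) : (forall x, continuous Phi x) ->
  ex_RInt (fun t => wgt M t * Phi (V t)) a b /\
  RInt (fun t => wgt M t * Phi (V t)) a b = RInt (fun t => wgt M t * Phi (Vc t)) a b.
Proof.
  intros HPhi. apply zone_RInt_comp; [exact HPhi|exact continuous_Vc|].
  intros t Ht. now rewrite extl_pos.
Qed.

Lemma zone_RInt_Derive (Phi : R -> R) : (forall x, continuous Phi x) ->
  ex_RInt (fun t => wgt M t * Phi (Derive V t)) a b /\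
  RInt (fun t => wgt M t * Phi (Derive V t)) a b = RInt (fun t => wgt M t * Phi (dVc t)) a b.
Proof.
  intros HPhi. apply zone_RInt_comp; [exact HPhi|exact continuous_dVc|].
  intros t Ht. now rewrite extl_pos.
Qed.

Lemma radial_sol_is_derive_flux t : 0 < t < 1 ->
  is_derive (fun s => wgt M s * Derive V s * V s) t
    (wgt M t * Derive V t ^ 2 - wgt M t * rpow (Rabs (V t)) (p + 1)).
Proof.
  intros Ht. destruct HV as (_ & _ & _ & Hode).
  rewrite <- (rpow_abs_mul_sq p (V t)).
  replace (wgt M t * Derive V t ^ 2 - wgt M t * (rpow (Rabs (V t)) (p - 1) * V t * V t))
    with (- (wgt M t * (rpow (Rabs (V t)) (p - 1) * V t)) * V t
          + wgt M t * Derive V t * Derive V t) by ring.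
  apply (is_derive_mult (fun s => wgt M s * Derive V s) V);
    [apply Hode, Ht|apply radial_sol_is_derive; lra|intros; apply Rmult_comm].
Qed.

(* Multiply the equation by [V] and integrate by parts over the zone: the boundary term
   [t^(M-1) V' V] vanishes at a zero of [V] and, through the weight, at [t = 0]. *)
Lemma zone_energy :
  RInt (fun t => wgt M t * rpow (Rabs (V t)) (p + 1)) a b =
  RInt (fun t => wgt M t * Derive V t ^ 2) a b.
Proof.
  pose proof (zone_ge0 _ _ _ Hz). pose proof (zone_lt _ _ _ Hz). pose proof (zone_le1 _ _ _ Hz).
  assert (Hpow : forall x, continuous (fun y => rpow (Rabs y) (p + 1)) x)
    by (intros; apply continuous_rpow_abs; lra).
  assert (Hsq : forall x, continuous (fun y => y ^ 2) x)
    by (intros; apply continuous_Rsqr, continuous_id).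
  destruct (zone_RInt_V _ Hpow) as [_ ->]. destruct (zone_RInt_Derive _ Hsq) as [_ ->].
  set (G1 := fun t => wgt M t * rpow (Rabs (Vc t)) (p + 1)).
  set (G2 := fun t => wgt M t * dVc t ^ 2).
  set (F := fun t => wgt M t * dVc t * Vc t).
  assert (HG1 : forall t, t <= 1 -> continuous G1 t)
    by (intros; apply (continuous_wgt_comp M Vc (fun y => rpow (Rabs y) (p + 1)));
        [lra|now apply continuous_Vc|exact Hpow]).
  assert (HG2 : forall t, t <= 1 -> continuous G2 t)
    by (intros; apply (continuous_wgt_comp M dVc (fun y => y ^ 2));
        [lra|now apply continuous_dVc|exact Hsq]).
  assert (HG : forall t, a <= t <= b -> continuous (fun t => G2 t - G1 t) t)
    by (intros; apply (continuous_Rminus G2 G1); [apply HG2|apply HG1]; lra).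
  assert (HF : forall t, t <= 1 -> continuous F t).
  { intros t Ht. apply continuous_Rmult; [apply continuous_Rmult|].
    - apply continuous_wgt. lra.
    - now apply continuous_dVc.
    - now apply continuous_Vc. }
  assert (Hderiv : forall t, a < t < b -> is_derive F t (G2 t - G1 t)).
  { intros t Ht. apply is_derive_ext_loc with (fun s => wgt M s * Derive V s * V s).
    - apply locally_interval with (Finite 0) p_infty; [simpl; lra|exact I|].
      intros y Hy _. unfold F. now rewrite !extl_pos.
    - unfold G1, G2. rewrite !extl_pos by lra. apply radial_sol_is_derive_flux. lra. }
  assert (HFa : F a = 0).
  { unfold F. destruct (zone_left _ _ _ Hz) as [-> | Ha].
    - unfold wgt. rewrite rpow_le0 by lra. ring.
    - destruct (Req_dec a 0) as [->|Ha0]; [unfold wgt; rewrite rpow_le0 by lra; ring|].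
      rewrite (extl_pos V) by lra. rewrite Ha. ring. }
  assert (HFb : F b = 0) by (unfold F; rewrite (extl_pos V), (zone_right _ _ _ Hz) by lra; ring).
  pose proof (RInt_FTC F (fun t => G2 t - G1 t) a b ltac:(lra) HG
                (HF a ltac:(lra)) (HF b ltac:(lra)) Hderiv) as HI.
  rewrite RInt_minusR in HI; [lra| |];
    apply (ex_RInt_continuous_R _ a b); try lra; intros; [apply HG2|apply HG1]; lra.
Qed.

Lemma zone_RInt_gt0 (Phi : R -> R) : (forall x, continuous Phi x) ->
  (forall x, 0 <= Phi x) -> 0 < Phi (V ((a + b) / 2)) ->
  0 < RInt (fun t => wgt M t * Phi (V t)) a b.
Proof.
  intros HPhi Hge Hmid. pose proof (zone_ge0 _ _ _ Hz). pose proof (zone_lt _ _ _ Hz).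
  pose proof (zone_le1 _ _ _ Hz).
  rewrite (proj2 (zone_RInt_V Phi HPhi)). apply RInt_gt0 with ((a + b) / 2); [lra| | |].
  - intros t Ht. apply (continuous_wgt_comp M Vc Phi); [lra|apply continuous_Vc; lra|exact HPhi].
  - intros t _. apply Rmult_le_pos; [apply wgt_ge0|apply Hge].
  - rewrite extl_pos by lra. apply Rmult_lt_0_compat; [apply wgt_gt0; lra|exact Hmid].
Qed.

Lemma zone_energy_gt0 : 0 < RInt (fun t => wgt M t * rpow (Rabs (V t)) (p + 1)) a b.
Proof.
  pose proof (zone_lt _ _ _ Hz).
  apply (zone_RInt_gt0 (fun y => rpow (Rabs y) (p + 1)));
    [intros; apply continuous_rpow_abs; lra|intros; apply rpow_ge0|].
  apply rpow_gt0, Rabs_pos_lt, (zone_ne0 _ _ _ Hz). lra.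
Qed.

Lemma zone_abs_le_maxabs t : a <= t <= b -> Rabs (V t) <= maxabs V a b.
Proof.
  intros Ht. pose proof (zone_ge0 _ _ _ Hz). pose proof (zone_le1 _ _ _ Hz).
  destruct (continuity_ab_maj (fun t => Rabs (Vc t)) a b) as [s [Hmax Hs]].
  - pose proof (zone_lt _ _ _ Hz). lra.
  - intros c Hc. apply continuity_pt_filterlim, (continuous_Rcomp Vc Rabs).
    + apply continuous_Vc. lra.
    + apply continuous_Rabs.
  - assert (Hext : forall x, a <= x -> Rabs (Vc x) = Rabs (V x)).
    { intros x Hx. unfold extl. destruct (Rle_dec x 0); [|reflexivity].
      now replace x with 0 by lra. }
    rewrite (maxabs_attained V a b s Hs).
    + rewrite <- (Hext t), <- (Hext s) by lra. now apply Hmax.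
    + intros x Hx. rewrite <- (Hext x), <- (Hext s) by lra. now apply Hmax.
Qed.

(* [V t] is minus the integral of [V'] up to the zero [c]; bound [2 l |V'|] pointwise by
   [two_mul_abs_le] with weight [s^(M-1)]. *)
Lemma radial_sol_abs_le t c l : 0 < t <= c -> c <= 1 -> V c = 0 -> 0 < l ->
  2 * l * Rabs (V t) <=
  l ^ 2 * (Rpower t (2 - M) / (M - 2)) + RInt (fun s => wgt M s * Derive V s ^ 2) t c.
Proof.
  intros Htc Hc1 HVc Hl.
  assert (Hex : forall (Phi : R -> R), (forall x, continuous Phi x) ->
            ex_RInt (fun s => Phi (Derive V s)) t c).
  { intros Phi HPhi. apply (ex_RInt_continuous_R _ t c); try lra. intros s Hs.
    apply (continuous_Rcomp (Derive V) Phi); [apply radial_sol_continuous_Derive; lra|apply HPhi]. }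
  assert (HexB : ex_RInt (fun s => wgt M s * Derive V s ^ 2) t c).
  { apply (ex_RInt_continuous_R _ t c); try lra. intros s Hs.
    apply (continuous_wgt_comp M (Derive V) (fun y => y ^ 2));
      [lra|apply radial_sol_continuous_Derive; lra|intros; apply continuous_Rsqr, continuous_id]. }
  assert (HexP : ex_RInt (fun s => Rpower s (1 - M)) t c).
  { apply (ex_RInt_continuous_R _ t c); try lra. intros s Hs.
    apply (ex_derive_continuous (K := R_AbsRing) (V := R_NormedModule)).
    eexists. apply is_derive_Reals, derivable_pt_lim_power. lra. }
  assert (HVt : V t = - RInt (Derive V) t c).
  { rewrite (is_RInt_unique (Derive V) t c (minus (V c) (V t))).
    - rewrite HVc. unfold minus, plus, opp; simpl. ring.
    - apply (is_RInt_derive V); intros x Hx; rewrite Rmin_left, Rmax_right in Hx by lra.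
      + apply radial_sol_is_derive. lra.
      + apply radial_sol_continuous_Derive. lra. }
  rewrite HVt, Rabs_Ropp.
  apply Rle_trans with (2 * l * RInt (fun s => Rabs (Derive V s)) t c).
  { apply Rmult_le_compat_l; [lra|]. apply abs_RInt_le; [lra|].
    apply (Hex (fun y => y)). intros; apply continuous_id. }
  rewrite <- RInt_scalR by (apply Hex, continuous_Rabs).
  apply Rle_trans with (RInt (fun s => l ^ 2 * Rpower s (1 - M) + wgt M s * Derive V s ^ 2) t c).
  - apply RInt_le; [lra|apply ex_RInt_scalR, Hex, continuous_Rabs|
      apply ex_RInt_plusR; [apply ex_RInt_scalR, HexP|exact HexB]|].
    intros s Hs. replace (Rpower s (1 - M)) with (/ wgt M s)
      by (unfold wgt; rewrite rpowE, <- Rpower_Ropp by lra; f_equal; ring).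
    apply two_mul_abs_le, wgt_gt0. lra.
  - rewrite (RInt_plusR (fun s => l ^ 2 * Rpower s (1 - M))), RInt_scalR;
      [|exact HexP|apply ex_RInt_scalR, HexP|exact HexB].
    apply Rplus_le_compat_r, Rmult_le_compat_l; [apply pow2_ge_0|].
    now apply RInt_Rpower_le.
Qed.

Lemma radial_sol_weighted_sq_le t c : 0 < t <= c -> c <= 1 -> V c = 0 ->
  wgt M t * V t ^ 2 <= RInt (fun s => wgt M s * Derive V s ^ 2) t c / (M - 2).
Proof.
  intros Htc Hc1 HVc.
  set (B := RInt (fun s => wgt M s * Derive V s ^ 2) t c).
  set (K := Rpower t (2 - M) / (M - 2)).
  assert (HK : 0 < K) by (apply Rdiv_lt_0_compat; [apply exp_pos|lra]).
  assert (HB : 0 <= B).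
  { apply RInt_ge0; [lra| |intros; apply Rmult_le_pos; [apply wgt_ge0|apply pow2_ge_0]].
    apply (ex_RInt_continuous_R _ t c); try lra. intros s Hs.
    apply (continuous_wgt_comp M (Derive V) (fun y => y ^ 2));
      [lra|apply radial_sol_continuous_Derive; lra|intros; apply continuous_Rsqr, continuous_id]. }
  assert (HwK : wgt M t * K = t / (M - 2)).
  { unfold K, wgt. rewrite rpowE by lra. unfold Rdiv. rewrite <- Rmult_assoc, <- Rpower_plus.
    replace (M - 1 + (2 - M)) with 1 by ring. now rewrite Rpower_1 by lra. }
  apply Rle_trans with (wgt M t * (B * K)).
  - apply Rmult_le_compat_l; [apply wgt_ge0|].
    apply sq_le_of_forall_amgm; [exact HK|exact HB|]. intros l Hl. now apply radial_sol_abs_le.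
  - replace (wgt M t * (B * K)) with (B * (wgt M t * K)) by ring. rewrite HwK.
    unfold Rdiv. rewrite <- Rmult_assoc.
    apply Rmult_le_compat_r; [apply Rlt_le, Rinv_0_lt_compat; lra|]. nra.
Qed.

Lemma zone_weighted_sq_le t : a < t <= b ->
  wgt M t * V t ^ 2 <= RInt (fun s => wgt M s * Derive V s ^ 2) a b / (M - 2).
Proof.
  intros Ht. pose proof (zone_ge0 _ _ _ Hz). pose proof (zone_le1 _ _ _ Hz).
  eapply Rle_trans; [apply (radial_sol_weighted_sq_le t b); try lra; apply (zone_right _ _ _ Hz)|].
  apply Rmult_le_compat_r; [apply Rlt_le, Rinv_0_lt_compat; lra|].
  set (D2 := fun s => wgt M s * Derive V s ^ 2).
  destruct (zone_RInt_Derive (fun y => y ^ 2)) as [HexD _];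
    [intros; apply continuous_Rsqr, continuous_id|].
  assert (Hat : ex_RInt D2 a t) by (apply (ex_RInt_Chasles_1 D2 a t b); [lra|exact HexD]).
  assert (Htb : ex_RInt D2 t b) by (apply (ex_RInt_Chasles_2 D2 a t b); [lra|exact HexD]).
  rewrite <- (RInt_ChaslesR D2 a t b Hat Htb).
  assert (0 <= RInt D2 a t); [|lra].
  apply RInt_ge0; [lra|exact Hat|].
  intros; apply Rmult_le_pos; [apply wgt_ge0|apply pow2_ge_0].
Qed.

(* [E = \int t^(M-1) |V|^(p-1) V^2 <= max|V|^(p-1) E / (M - 2)] by the previous bound. *)
Lemma zone_maxabs_rpow_ge : M - 2 <= rpow (maxabs V a b) (p - 1).
Proof.
  pose proof (zone_ge0 _ _ _ Hz). pose proof (zone_lt _ _ _ Hz). pose proof (zone_le1 _ _ _ Hz).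
  set (E := RInt (fun t => wgt M t * rpow (Rabs (V t)) (p + 1)) a b).
  set (Mx := maxabs V a b).
  assert (HE : 0 < E) by apply zone_energy_gt0.
  assert (Hsq : forall x, continuous (fun y => y ^ 2) x)
    by (intros; apply continuous_Rsqr, continuous_id).
  destruct (zone_RInt_V (fun y => y ^ 2) Hsq) as [HexW _].
  set (W := RInt (fun t => wgt M t * V t ^ 2) a b).
  assert (Htail : forall t, a < t < b -> wgt M t * V t ^ 2 <= E / (M - 2))
    by (intros t Ht; unfold E; rewrite zone_energy; apply zone_weighted_sq_le; lra).
  assert (HW : W <= E / (M - 2)).
  { apply Rle_trans with ((b - a) * (E / (M - 2)));
      [apply RInt_le_const; [lra|exact HexW|exact Htail]|].
    assert (0 < E / (M - 2)) by (apply Rdiv_lt_0_compat; lra). nra. }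
  assert (HEW : E <= rpow Mx (p - 1) * W).
  { unfold W. rewrite <- RInt_scalR by exact HexW.
    apply RInt_le; [lra| |apply ex_RInt_scalR, HexW|].
    - apply (zone_RInt_V (fun y => rpow (Rabs y) (p + 1))).
      intros; apply continuous_rpow_abs; lra.
    - intros t Ht. rewrite <- rpow_abs_mul_sq.
      assert (rpow (Rabs (V t)) (p - 1) <= rpow Mx (p - 1))
        by (apply rpow_le_l; [split; [apply Rabs_pos|apply zone_abs_le_maxabs; lra]|lra]).
      assert (0 <= wgt M t * (V t * V t)) by (apply Rmult_le_pos; [apply wgt_ge0|apply Rle_0_sqr]).
      simpl. nra. }
  assert (0 <= rpow Mx (p - 1)) by apply rpow_ge0.
  apply Rnot_lt_le. intros Hlt.
  assert (rpow Mx (p - 1) * W <= rpow Mx (p - 1) * (E / (M - 2))) by (apply Rmult_le_compat_l; lra).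
  assert (rpow Mx (p - 1) * (E / (M - 2)) < (M - 2) * (E / (M - 2)))
    by (apply Rmult_lt_compat_r; [apply Rdiv_lt_0_compat|]; lra).
  assert (HEq : (M - 2) * (E / (M - 2)) = E) by (field; lra). lra.
Qed.

Section Cutoff.

Variable eps : R.
Hypothesis He : 0 < eps.

Local Notation u := (restrict a b (fun t => Psi eps (V t))).
Local Notation du := (restrict a b (fun t => dPsi eps (V t) * Derive V t)).

Lemma cutoff_local t : 0 < t <= 1 ->
  a < t < b \/ locally t (fun y => u y = 0 /\ du y = 0).
Proof.
  intros Ht. pose proof (zone_lt _ _ _ Hz). pose proof (zone_le1 _ _ _ Hz).
  assert (Hzero : forall c, 0 < c <= 1 -> V c = 0 -> locally c (fun y => u y = 0 /\ du y = 0)).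
  { intros c Hc HVc.
    destruct (continuous_eps V c eps (radial_sol_continuous c Hc) He) as [d [Hd Hnear]].
    exists (mkposreal d Hd). intros y Hy.
    unfold ball in Hy; simpl in Hy; unfold AbsRing_ball, abs, minus, plus, opp in Hy; simpl in Hy.
    destruct (Rlt_dec a y); destruct (Rlt_dec y b); try (split; apply restrict_out; lra).
    rewrite !restrict_in by lra.
    assert (Hsmall : Rabs (V y) <= eps)
      by (specialize (Hnear y Hy); rewrite HVc, Rminus_0_r in Hnear; lra).
    destruct (Psi_small eps (V y) Hsmall) as [-> ->]. split; ring. }
  destruct (Rtotal_order t a) as [H1|[->|H1]].
  - right. apply locally_interval with m_infty (Finite a); [exact I|exact H1|].
    intros y _ Hy. simpl in Hy. split; apply restrict_out; lra.
  - right. destruct (zone_left _ _ _ Hz) as [Ha|Ha]; [lra|]. now apply Hzero.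
  - destruct (Rtotal_order t b) as [H2|[->|H2]].
    + left. lra.
    + right. apply Hzero; [lra|apply (zone_right _ _ _ Hz)].
    + right. apply locally_interval with (Finite b) p_infty; [exact H2|exact I|].
      intros y Hy _. simpl in Hy. split; apply restrict_out; lra.
Qed.

Lemma is_derive_cutoff t : 0 < t <= 1 -> is_derive u t (du t).
Proof.
  intros Ht. destruct (cutoff_local t Ht) as [Hin|Hloc].
  - apply is_derive_ext_loc with (fun y => Psi eps (V y)).
    + apply locally_interval with (Finite a) (Finite b); try (simpl; lra).
      intros y Hy1 Hy2. simpl in *. rewrite restrict_in by lra. reflexivity.
    + rewrite restrict_in by lra.
      replace (dPsi eps (V t) * Derive V t) with (scal (Derive V t) (dPsi eps (V t)))
        by (unfold scal; simpl; unfold mult; simpl; ring).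
      apply (is_derive_comp (Psi eps) V); [now apply is_derive_Psi|].
      apply radial_sol_is_derive. exact Ht.
  - apply is_derive_ext_loc with (fun _ => 0).
    + destruct Hloc as [d Hd]. exists d. intros y Hy. symmetry. apply Hd, Hy.
    + destruct Hloc as [d Hd]. rewrite (proj2 (Hd t (ball_center t d))).
      apply (is_derive_const (K := R_AbsRing) (V := R_NormedModule)).
Qed.

Lemma Derive_cutoff_loc t : 0 < t <= 1 -> locally t (fun y => Derive u y = du y).
Proof.
  intros Ht. destruct (cutoff_local t Ht) as [Hin|Hloc].
  - apply locally_interval with (Finite a) (Finite b); try (simpl; lra).
    intros y Hy1 Hy2. apply is_derive_unique, is_derive_cutoff.
    pose proof (zone_ge0 _ _ _ Hz). pose proof (zone_le1 _ _ _ Hz). simpl in *. lra.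
  - apply locally_locally in Hloc. destruct Hloc as [d Hd]. exists d. intros y Hy.
    destruct (Hd y Hy) as [d' Hd'].
    rewrite (Derive_ext_loc _ (fun _ => 0)), Derive_const.
    + symmetry. apply (Hd' y (ball_center y d')).
    + exists d'. intros z Hzd. apply Hd', Hzd.
Qed.

Lemma continuous_cutoff_derive t : 0 < t <= 1 -> continuous (Derive u) t.
Proof.
  intros Ht. apply continuous_ext_loc with du.
  { destruct (Derive_cutoff_loc t Ht) as [d Hd]. exists d. intros y Hy. symmetry. apply Hd, Hy. }
  destruct (cutoff_local t Ht) as [Hin|Hloc].
  - apply continuous_ext_loc with (fun y => dPsi eps (V y) * Derive V y).
    + apply locally_interval with (Finite a) (Finite b); try (simpl; lra).
      intros y Hy1 Hy2. simpl in *. rewrite restrict_in by lra. reflexivity.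
    + apply continuous_Rmult; [|now apply radial_sol_continuous_Derive].
      apply (continuous_Rcomp V (dPsi eps)); [now apply radial_sol_continuous|].
      now apply continuous_dPsi.
  - apply continuous_ext_loc with (fun _ => 0); [|apply continuous_const].
    destruct Hloc as [d Hd]. exists d. intros y Hy. symmetry. apply Hd, Hy.
Qed.

Lemma cutoff_near0 : exists d, 0 < d /\ exists g dg : R -> R,
  continuous g 0 /\ continuous dg 0 /\ forall t, 0 < t < d -> u t = g t /\ du t = dg t.
Proof.
  pose proof (zone_lt _ _ _ Hz). pose proof (zone_le1 _ _ _ Hz).
  destruct (Req_dec a 0) as [Ha|Ha].
  - exists b. split; [lra|].
    exists (fun t => Psi eps (Vc t)), (fun t => dPsi eps (Vc t) * dVc t). repeat split.
    + apply (continuous_Rcomp Vc (Psi eps)); [apply continuous_Vc; lra|now apply continuous_Psi].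
    + apply continuous_Rmult; [|apply continuous_dVc; lra].
      apply (continuous_Rcomp Vc (dPsi eps)); [apply continuous_Vc; lra|now apply continuous_dPsi].
    + rewrite restrict_in, extl_pos by lra. reflexivity.
    + rewrite restrict_in, !extl_pos by lra. reflexivity.
  - exists a. pose proof (zone_ge0 _ _ _ Hz). split; [lra|].
    exists (fun _ => 0), (fun _ => 0). split; [apply continuous_const|].
    split; [apply continuous_const|]. intros t Ht. split; apply restrict_out; lra.
Qed.

Lemma wint_cutoff (F : R -> R) : (forall x, continuous F x) -> F 0 = 0 ->
  (wint_ex M (fun t => F (u t)) /\
   wint M (fun t => F (u t)) = RInt (fun t => wgt M t * F (Psi eps (V t))) a b) /\
  (wint_ex M (fun t => F (Derive u t)) /\
   wint M (fun t => F (Derive u t)) =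
     RInt (fun t => wgt M t * F (dPsi eps (V t) * Derive V t)) a b).
Proof.
  intros HF HF0. pose proof (zone_ge0 _ _ _ Hz). pose proof (zone_lt _ _ _ Hz).
  pose proof (zone_le1 _ _ _ Hz).
  assert (Hdu : forall t, 0 < t <= 1 -> Derive u t = du t)
    by (intros t Ht; destruct (Derive_cutoff_loc t Ht) as [d Hd]; apply Hd, ball_center).
  destruct cutoff_near0 as [d [Hd [g [dg [Hg [Hdg Hnear]]]]]].
  split; apply (wint_RInt_supported M _ _ a b); try lra.
  - intros t Ht. apply (continuous_Rcomp u F); [|apply HF].
    apply (ex_derive_continuous (K := R_AbsRing) (V := R_NormedModule)).
    eexists. now apply is_derive_cutoff.
  - eexists. apply (filterlim_at_right_of_continuous _ (fun t => F (g t)) d Hd).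
    + intros t Ht. now rewrite (proj1 (Hnear t Ht)).
    + apply (continuous_Rcomp g F); [exact Hg|apply HF].
  - intros t _ Ht. now rewrite restrict_out.
  - intros t Ht. now rewrite restrict_in.
  - intros t Ht.
    apply (continuous_Rcomp (Derive u) F); [now apply continuous_cutoff_derive|apply HF].
  - eexists. apply (filterlim_at_right_of_continuous _ (fun t => F (dg t)) (Rmin d 1)).
    + now apply Rmin_glb_lt; [|lra].
    + intros t Ht. pose proof (Rmin_l d 1). pose proof (Rmin_r d 1).
      rewrite Hdu, (proj2 (Hnear t ltac:(lra))) by lra. reflexivity.
    + apply (continuous_Rcomp dg F); [exact Hdg|apply HF].
  - intros t Ht Hout. now rewrite Hdu, restrict_out.
  - intros t Ht. rewrite Hdu, restrict_in by lra. reflexivity.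
Qed.

Lemma wint_Derive_cutoff_le :
  wint M (fun t => Derive u t ^ 2) <= RInt (fun t => wgt M t * Derive V t ^ 2) a b.
Proof.
  pose proof (zone_lt _ _ _ Hz).
  destruct (wint_cutoff (fun y => y ^ 2)) as [_ [_ ->]];
    [intros; apply continuous_Rsqr, continuous_id|simpl; ring|].
  apply RInt_le; [lra| | |].
  - apply (zone_RInt_comp (fun y => y ^ 2) _ (fun t => dPsi eps (Vc t) * dVc t)).
    + intros; apply continuous_Rsqr, continuous_id.
    + intros t Ht. apply continuous_Rmult; [|now apply continuous_dVc].
      apply (continuous_Rcomp Vc (dPsi eps)); [now apply continuous_Vc|now apply continuous_dPsi].
    + intros t Ht. now rewrite !extl_pos.
  - apply (zone_RInt_Derive (fun y => y ^ 2)). intros; apply continuous_Rsqr, continuous_id.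
  - intros t Ht. apply Rmult_le_compat_l; [apply wgt_ge0|].
    pose proof (dPsi_abs_le1 eps (V t) He). pose proof (Rabs_pos (dPsi eps (V t))).
    rewrite Rpow_mult_distr, <- (pow2_abs (dPsi eps (V t))).
    assert (Rabs (dPsi eps (V t)) ^ 2 <= 1) by nra.
    pose proof (pow2_ge_0 (Derive V t)). nra.
Qed.

Lemma cutoff_H10M : H10M M u.
Proof.
  pose proof (zone_lt _ _ _ Hz). pose proof (zone_le1 _ _ _ Hz).
  destruct (wint_cutoff (fun y => y ^ 2)) as [[Hw1 _] [Hw2 _]];
    [intros; apply continuous_Rsqr, continuous_id|simpl; ring|].
  split; [apply restrict_out; lra|]. split; [|split; assumption].
  intros t Ht. split; [eexists; now apply is_derive_cutoff|now apply continuous_cutoff_derive].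
Qed.

End Cutoff.

Lemma zone_weight_mass : ex_RInt (wgt M) a b /\ RInt (wgt M) a b <= 1.
Proof.
  pose proof (zone_ge0 _ _ _ Hz). pose proof (zone_lt _ _ _ Hz). pose proof (zone_le1 _ _ _ Hz).
  assert (Hex : ex_RInt (wgt M) a b)
    by (apply (ex_RInt_continuous_R _ a b); try lra; intros; apply continuous_wgt; lra).
  split; [exact Hex|]. apply Rle_trans with ((b - a) * 1); [|lra].
  apply RInt_le_const; [lra|exact Hex|]. intros t Ht. apply wgt_le1; lra.
Qed.

Lemma zone_Psi_RInt s eps : 0 < s -> 0 < eps ->
  ex_RInt (fun t => wgt M t * rpow (Rabs (Psi eps (V t))) s) a b.
Proof.
  intros Hs He.
  apply (zone_RInt_V (fun y => rpow (Rabs (Psi eps y)) s)). intros x.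
  apply (continuous_Rcomp (Psi eps) (fun y => rpow (Rabs y) s));
    [now apply continuous_Psi|now apply continuous_rpow_abs].
Qed.

Lemma zone_Psi_RInt_gt0 s eps : 0 < s -> 0 < eps < Rabs (V ((a + b) / 2)) ->
  0 < RInt (fun t => wgt M t * rpow (Rabs (Psi eps (V t))) s) a b.
Proof.
  intros Hs He. apply (zone_RInt_gt0 (fun y => rpow (Rabs (Psi eps y)) s)).
  - intros x. apply (continuous_Rcomp (Psi eps) (fun y => rpow (Rabs y) s));
      [apply continuous_Psi; lra|now apply continuous_rpow_abs].
  - intros x. apply rpow_ge0.
  - apply rpow_gt0, Rabs_pos_lt, Rgt_not_eq, Psi_gt0, He.
Qed.

Lemma zone_cutoff_sobolev eps : 0 < S_M M -> 0 < eps < Rabs (V ((a + b) / 2)) ->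
  S_M M * rpow (RInt (fun t => wgt M t * rpow (Rabs (Psi eps (V t))) (2 * M / (M - 2))) a b)
                ((M - 2) / M)
  <= RInt (fun t => wgt M t * Derive V t ^ 2) a b.
Proof.
  intros HS He. pose proof (zone_ge0 _ _ _ Hz). pose proof (zone_lt _ _ _ Hz).
  pose proof (zone_le1 _ _ _ Hz).
  set (q := 2 * M / (M - 2)).
  assert (Hq : 0 < q) by (apply Rdiv_lt_0_compat; lra).
  set (u := restrict a b (fun t => Psi eps (V t))).
  assert (Hnz : exists t, 0 < t < 1 /\ u t <> 0).
  { exists ((a + b) / 2). split; [lra|]. unfold u. rewrite restrict_in by lra.
    apply Rgt_not_eq, Psi_gt0, He. }
  destruct (wint_cutoff eps (proj1 He) (fun y => rpow (Rabs y) q)) as [[Hexq Hwq] _].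
  { intros; now apply continuous_rpow_abs. }
  { rewrite Rabs_R0. apply rpow_le0. lra. }
  fold u in Hexq, Hwq.
  set (Y := RInt (fun t => wgt M t * rpow (Rabs (Psi eps (V t))) q) a b) in *.
  assert (HRY : 0 < rpow Y ((M - 2) / M)) by (apply rpow_gt0, zone_Psi_RInt_gt0; lra).
  pose proof (S_M_le_quotient M u HS (cutoff_H10M eps (proj1 He)) Hnz Hexq) as HSq.
  fold q in HSq. rewrite Hwq in HSq. fold Y in HSq.
  apply Rle_trans with (wint M (fun t => Derive u t ^ 2)); [|apply wint_Derive_cutoff_le; lra].
  apply Rmult_le_reg_r with (/ rpow Y ((M - 2) / M)); [now apply Rinv_0_lt_compat|].
  rewrite Rmult_assoc, Rinv_r, Rmult_1_r by lra. exact HSq.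
Qed.

(* Jensen's inequality on the zone passes from the Sobolev exponent [2M/(M-2)] down to [p+1]. *)
Lemma zone_sobolev eps : p < (M + 2) / (M - 2) -> 0 < S_M M ->
  0 < eps < Rabs (V ((a + b) / 2)) ->
  S_M M * rpow (RInt (fun t => wgt M t * rpow (Rabs (Psi eps (V t))) (p + 1)) a b) (2 / (p + 1))
  <= RInt (fun t => wgt M t * rpow (Rabs (V t)) (p + 1)) a b.
Proof.
  intros HpM HS He. pose proof (zone_lt _ _ _ Hz).
  set (q := 2 * M / (M - 2)).
  assert (Hq : p + 1 < q).
  { unfold q. replace (2 * M / (M - 2)) with ((M + 2) / (M - 2) + 1) by (field; lra). lra. }
  pose proof (zone_cutoff_sobolev eps HS He) as HSY.
  replace ((M - 2) / M) with (2 / q) in HSY by (unfold q; field; lra).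
  fold q in HSY. rewrite <- zone_energy in HSY.
  set (Y := RInt (fun t => wgt M t * rpow (Rabs (Psi eps (V t))) q) a b) in *.
  set (D := RInt (fun t => wgt M t * rpow (Rabs (Psi eps (V t))) (p + 1)) a b).
  assert (HY : 0 < Y) by (apply zone_Psi_RInt_gt0; [lra|exact He]).
  destruct zone_weight_mass as [Hw Hmass].
  pose proof (RInt_rpow_jensen (wgt M) (fun t => Rabs (Psi eps (V t))) a b q (p + 1)
    ltac:(lra) ltac:(lra) Hw (zone_Psi_RInt q eps ltac:(lra) ltac:(lra))
    (zone_Psi_RInt (p + 1) eps ltac:(lra) ltac:(lra))
    (fun t _ => conj (wgt_ge0 M t) (Rabs_pos _)) Hmass HY) as HJ.
  fold D Y in HJ.
  assert (HDY : rpow D (2 / (p + 1)) <= rpow Y (2 / q)).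
  { replace (2 / q) with ((p + 1) / q * (2 / (p + 1))) by (field; lra).
    rewrite <- rpow_rpow by (try apply Rdiv_lt_0_compat; lra).
    apply rpow_le_l; [split; [|exact HJ]|apply Rlt_le, Rdiv_lt_0_compat; lra].
    apply RInt_ge0; [lra|apply zone_Psi_RInt; lra|].
    intros; apply Rmult_le_pos; [apply wgt_ge0|apply rpow_ge0]. }
  apply Rle_trans with (S_M M * rpow Y (2 / q)); [|exact HSY].
  apply Rmult_le_compat_l; [lra|exact HDY].
Qed.

Lemma zone_truncation_error eps : 0 < eps ->
  RInt (fun t => wgt M t * rpow (Rabs (V t)) (p + 1)) a b
    - 2 * (p + 1) * rpow (maxabs V a b) p * eps
  <= RInt (fun t => wgt M t * rpow (Rabs (Psi eps (V t))) (p + 1)) a b.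
Proof.
  intros He. pose proof (zone_ge0 _ _ _ Hz). pose proof (zone_lt _ _ _ Hz).
  pose proof (zone_le1 _ _ _ Hz).
  set (C := 2 * (p + 1) * rpow (maxabs V a b) p * eps).
  assert (HC : 0 <= C)
    by (unfold C; pose proof (rpow_ge0 (maxabs V a b) p); apply Rmult_le_pos; [nra|lra]).
  destruct zone_weight_mass as [Hw Hmass].
  assert (HE : ex_RInt (fun t => wgt M t * rpow (Rabs (V t)) (p + 1)) a b)
    by (apply (zone_RInt_V (fun y => rpow (Rabs y) (p + 1)));
        intros; apply continuous_rpow_abs; lra).
  assert (Hle : RInt (fun t => wgt M t * rpow (Rabs (V t)) (p + 1) + (- C) * wgt M t) a b <=
                RInt (fun t => wgt M t * rpow (Rabs (Psi eps (V t))) (p + 1)) a b).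
  { apply RInt_le; [lra|apply ex_RInt_plusR; [exact HE|now apply ex_RInt_scalR]|
      apply zone_Psi_RInt; lra|].
    intros t Ht. set (x := Rabs (V t)). set (y := Rabs (Psi eps (V t))).
    pose proof (psi_bounds eps x He (Rabs_pos _)) as Hpsi.
    assert (Hy : y = psi eps x)
      by (unfold y; rewrite Psi_abs by lra; fold x; apply Rabs_pos_eq; lra).
    rewrite <- Hy in Hpsi.
    assert (HxK : x <= maxabs V a b) by (apply zone_abs_le_maxabs; lra).
    pose proof (rpow_sub_le x y (maxabs V a b) (p + 1) ltac:(lra) HxK ltac:(lra)) as Hd.
    replace (p + 1 - 1) with p in Hd by ring.
    assert (rpow x (p + 1) - rpow y (p + 1) <= C).
    { eapply Rle_trans; [exact Hd|]. unfold C. pose proof (rpow_ge0 (maxabs V a b) p).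
      replace (2 * (p + 1) * rpow (maxabs V a b) p * eps)
        with ((p + 1) * rpow (maxabs V a b) p * (2 * eps)) by ring.
      apply Rmult_le_compat_l; [apply Rmult_le_pos|]; lra. }
    assert (wgt M t * (rpow x (p + 1) - rpow y (p + 1)) <= wgt M t * C)
      by (apply Rmult_le_compat_l; [apply wgt_ge0|lra]).
    lra. }
  rewrite (RInt_plusR (fun t => wgt M t * rpow (Rabs (V t)) (p + 1))), RInt_scalR in Hle;
    [|exact Hw|exact HE|now apply ex_RInt_scalR].
  assert (C * RInt (wgt M) a b <= C * 1) by (apply Rmult_le_compat_l; lra).
  lra.
Qed.

(* [zone_sobolev] applies to truncations whose [L^(p+1)] mass is arbitrarily close to [E];
   this gives [S_M E^(2/(p+1)) <= E]. *)
Lemma zone_energy_ge : p < (M + 2) / (M - 2) ->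
  rpow (S_M M) ((p + 1) / (p - 1)) <= RInt (fun t => wgt M t * rpow (Rabs (V t)) (p + 1)) a b.
Proof.
  intros HpM. pose proof (zone_lt _ _ _ Hz).
  set (E := RInt (fun t => wgt M t * rpow (Rabs (V t)) (p + 1)) a b).
  assert (HE : 0 < E) by apply zone_energy_gt0.
  destruct (Rle_dec (S_M M) 0) as [HS|HS]; [rewrite rpow_le0; lra|].
  replace ((p + 1) / (p - 1)) with ((p + 1) / (p + 1 - 2)) by (f_equal; ring).
  apply rpow_le_of_mul_rpow_le; [lra|exact HE|lra|].
  apply mul_rpow_le_of_approx; [lra|exact HE|apply Rdiv_lt_0_compat; lra|].
  intros y Hy.
  set (C := 2 * (p + 1) * rpow (maxabs V a b) p).
  assert (HC : 0 <= C) by (unfold C; pose proof (rpow_ge0 (maxabs V a b) p); nra).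
  set (v0 := Rabs (V ((a + b) / 2))).
  assert (Hv0 : 0 < v0) by (apply Rabs_pos_lt, (zone_ne0 _ _ _ Hz); lra).
  pose proof (Rmin_l (v0 / 2) ((E - y) / (2 * (C + 1)))) as Heps_v0.
  pose proof (Rmin_r (v0 / 2) ((E - y) / (2 * (C + 1)))) as Heps_E.
  set (eps := Rmin (v0 / 2) ((E - y) / (2 * (C + 1)))) in *.
  assert (He : 0 < eps)
    by (apply Rmin_glb_lt; [lra|apply Rdiv_lt_0_compat; lra]).
  assert (HCe : C * eps < E - y).
  { apply Rle_lt_trans with (C * ((E - y) / (2 * (C + 1)))).
    - apply Rmult_le_compat_l; [exact HC|exact Heps_E].
    - apply Rmult_lt_reg_r with (2 * (C + 1)); [lra|].
      replace (C * ((E - y) / (2 * (C + 1))) * (2 * (C + 1))) with (C * (E - y)) by (field; lra).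
      nra. }
  exists (RInt (fun t => wgt M t * rpow (Rabs (Psi eps (V t))) (p + 1)) a b). split.
  - pose proof (zone_truncation_error eps He) as Htrunc. fold E C in Htrunc. lra.
  - apply zone_sobolev; [exact HpM|lra|]. fold v0. lra.
Qed.

Lemma zone_maxabs_ge k : 0 < k < p - 1 -> Rmin 1 (Rpower (M - 2) (/ k)) <= maxabs V a b.
Proof.
  intros Hk. pose proof (zone_ge0 _ _ _ Hz). pose proof (zone_lt _ _ _ Hz).
  apply (Rmin_Rpower_le_of_le_rpow _ (p - 1)); [lra|exact Hk| |apply zone_maxabs_rpow_ge].
  apply Rle_trans with (Rabs (V a)); [apply Rabs_pos|apply zone_abs_le_maxabs; lra].
Qed.

End NodalZone.

Theorem lemma2p5 (M : R) (m : nat) (v : R -> R -> R) (tz : R -> nat -> R) :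
  2 < M -> (1 <= m)%nat ->
  (forall p, 1 < p < (M + 2) / (M - 2) ->
     radial_sol M p (v p) /\ nodal_points m (v p) (tz p) /\ 0 < v p 0) ->
  forall i : nat, (i < m)%nat ->
    let I1 := fun p => RInt (fun t => wgt M t * rpow (Rabs (v p t)) (p + 1))
                            (tz p i) (tz p (S i)) in
    let I2 := fun p => RInt (fun t => wgt M t * Derive (v p) t ^ 2)
                            (tz p i) (tz p (S i)) in
    liminf_left I1 ((M + 2) / (M - 2)) = liminf_left I2 ((M + 2) / (M - 2)) /\
    Rbar_le (Finite (rpow (S_M M) (M / 2))) (liminf_left I1 ((M + 2) / (M - 2))) /\
    Rbar_lt (Finite 0)
      (liminf_left (fun p => maxabs (v p) (tz p i) (tz p (S i))) ((M + 2) / (M - 2))).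
Proof.
  intros HM _ Hsol i Hi I1 I2.
  set (pM := (M + 2) / (M - 2)).
  assert (HpM : 1 < pM)
    by (unfold pM; replace ((M + 2) / (M - 2)) with (1 + 4 / (M - 2)) by (field; lra);
        pose proof (Rdiv_lt_0_compat 4 (M - 2) ltac:(lra) ltac:(lra)); lra).
  assert (Hzone : forall p, 1 < p < pM ->
            radial_sol M p (v p) /\ nodal_zone (v p) (tz p i) (tz p (S i))).
  { intros p Hp. assert (Hp' : 1 < p < (M + 2) / (M - 2)) by (fold pM; lra).
    destruct (Hsol p Hp') as (Hr & Hn & _).
    split; [exact Hr|now apply (nodal_points_zone m)]. }
  split; [|split].
  - apply (liminf_left_ext _ _ _ (pM - 1)); [lra|]. intros p Hp.
    destruct (Hzone p ltac:(lra)) as [Hr Hz]. apply (zone_energy M p); assumption || lra.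
  - replace (M / 2) with ((pM + 1) / (pM - 1)) by (unfold pM; field; lra).
    apply (liminf_left_ge_continuous I1 (fun p => rpow (S_M M) ((p + 1) / (p - 1))) pM (pM - 1));
      [lra|apply continuous_rpow_ratio; lra|].
    intros p Hp. destruct (Hzone p ltac:(lra)) as [Hr Hz].
    apply (zone_energy_ge M p); try assumption; fold pM; lra.
  - set (k := (pM - 1) / 2). set (c := Rmin 1 (Rpower (M - 2) (/ k))).
    apply Rbar_lt_le_trans with (Finite c); [apply Rmin_glb_lt; [lra|apply exp_pos]|].
    apply (liminf_left_ge_continuous _ (fun _ => c) pM k); [unfold k; lra|apply continuous_const|].
    intros p Hp. unfold k in Hp. destruct (Hzone p ltac:(lra)) as [Hr Hz].
    apply (zone_maxabs_ge M p); try assumption; unfold k; lra.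
Qed.
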